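(* Let $a>0$ with $2a/\sqrt{3}<\pi/2$, let $(T,g_{hex})$ be the singular torus defined below and $\sigma$ the isometry of $(T,g_{hex})$ induced by $(x,y,z)\mapsto(-x,-y,z+\pi)$. Then for every point $m$ of $(T,g_{hex})$, $$d_{(T,g_{hex})}(m,\sigma(m))\ge\pi.$$ Moreover equality is achieved, by a geodesic contained in the surface $\theta=\theta_0$, where $(r,\theta,z)$ are cylindrical coordinates about the vertical axis through the center of the hexagonal prism containing $m$ and $\theta_0$ is the angular coordinate of $m$.
   Context: $\Delta\subset\mathbb{R}^2$ is the hexagonal lattice generated by $(2a,0)$ and $(a,a\sqrt3)$; the vertical hexagonal prisms $D_p=V_p\times\mathbb{R}$, $p\in\Delta$, with $V_p$ the Voronoi cell of $p$, pave $\mathbb{R}^3$. On $\mathbb{R}^3$ let $h=dx^2+dy^2+\cos^2\!\big(\mathrm{dist}((x,y),\Delta)\big)\,dz^2$ ($\mathrm{dist}$ Euclidean in $\mathbb{R}^2$); in $D_p$, with cylindrical coordinates $(r,\theta,z)$ centered at the axis through $p$, $h=dr^2+r^2d\theta^2+\cos^2 r\,dz^2$. $(T,g_{hex})$ is the quotient of $(\mathbb{R}^3,h)$ by the translations $(x,y,z)\mapsto(x+4a,y,z)$, $(x,y,z)\mapsto(x+2a,y+2a\sqrt3,z)$, $(x,y,z)\mapsto(x,y,z+2\pi)$. The distance $d_{(T,g_{hex})}$ is the infimum of $h$-lengths $\int (h(\gamma',\gamma'))^{1/2}dt$ of piecewise smooth curves joining the points. *)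

From Stdlib Require Import Reals Lra ZArith.
From Coquelicot Require Import Coquelicot.
Open Scope R_scope.

Definition R3 := (R * R * R)%type.
Definition px (P : R3) : R := fst (fst P).
Definition py (P : R3) : R := snd (fst P).
Definition pz (P : R3) : R := snd P.

Definition Delta_pt (a : R) (i j : Z) : R * R :=
  (2 * a * IZR i + a * IZR j, a * sqrt 3 * IZR j).

Definition in_Delta (a : R) (c : R * R) : Prop :=
  exists i j : Z, c = Delta_pt a i j.

Definition dist2 (p q : R * R) : R :=
  sqrt ((fst p - fst q) ^ 2 + (snd p - snd q) ^ 2).

Definition dist_Delta (a x y : R) : R :=
  real (Glb_Rbar (fun d => exists c, in_Delta a c /\ d = dist2 (x, y) c)).

Definition in_Voronoi (a : R) (c q : R * R) : Prop :=
  in_Delta a c /\ forall d, in_Delta a d -> dist2 q c <= dist2 q d.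

Definition h_speed (a : R) (P V : R3) : R :=
  sqrt (px V ^ 2 + py V ^ 2
        + (cos (dist_Delta a (px P) (py P))) ^ 2 * pz V ^ 2).

Definition C1 (f : R -> R) : Prop :=
  (forall t, ex_derive f t) /\ (forall t, continuous (Derive f) t).

Fixpoint sumR (l : nat -> R) (n : nat) : R :=
  match n with O => 0 | S k => sumR l k + l k end.

Definition ps_curve_length (a : R) (g : R -> R3) (L : R) : Prop :=
  exists (n : nat) (tt : nat -> R) (l : nat -> R),
    tt O = 0 /\ tt n = 1 /\
    (forall i, (i < n)%nat -> tt i < tt (S i)) /\
    (forall i, (i < n)%nat ->
       exists fx fy fz : R -> R,
         C1 fx /\ C1 fy /\ C1 fz /\
         (forall t, tt i <= t <= tt (S i) -> g t = (fx t, fy t, fz t)) /\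
         is_RInt (fun t => h_speed a (fx t, fy t, fz t)
                                     (Derive fx t, Derive fy t, Derive fz t))
                 (tt i) (tt (S i)) (l i)) /\
    L = sumR l n.

Definition in_T_lattice (a : R) (v : R3) : Prop :=
  exists i j k : Z,
    v = (4 * a * IZR i + 2 * a * IZR j, 2 * a * sqrt 3 * IZR j, 2 * PI * IZR k).

Definition add3 (P Q : R3) : R3 := (px P + px Q, py P + py Q, pz P + pz Q).

(* Piecewise smooth curve in R^3 from P to a lift Q + v of the class of Q. *)
Definition curve_T (a : R) (g : R -> R3) (P Q : R3) (L : R) : Prop :=
  exists v, in_T_lattice a v /\ g 0 = P /\ g 1 = add3 Q v /\
            ps_curve_length a g L.

Definition dist_T (a : R) (P Q : R3) : R :=
  real (Glb_Rbar (fun L => exists g, curve_T a g P Q L)).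

Definition sigma_hex (P : R3) : R3 := (- px P, - py P, pz P + PI).

From Pilot Require Import Defs.
From Stdlib Require Import Reals.
From Coquelicot Require Import Coquelicot.
From Stdlib Require Import Lra Lia Psatz ZArith List.
Open Scope R_scope.

(* In a half-plane [theta = theta0] of a prism, with [s] the signed distance to
   the axis, [h] is [ds^2 + cos^2 s dz^2]: the round unit sphere in latitude and
   longitude.  After the lattice translation that brings [sigma(m)] back to the
   prism of [m], it is the antipode of [m] there, so a great half-circle of
   length [PI] joins them; it stays in the Voronoi cell because cells are
   centrally symmetric.

   Conversely, let [d] be the lattice point through which [sigma(m)], moved by
   a translation of [T], is the reflection of [m] (shifted by [PI] in [z]).  The
   map [F(p, z) = (cos rho cos z, cos rho sin z, sin rho u)] to the unit sphere
   of [R^4], where [p = d + |p - d| u] and [rho] is [|p - d|] bent to stay below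
   [PI - 2a/sqrt 3], is 1-Lipschitz from [h] to the round metric: [sin rho <= |p - d|],
   and [|cos rho| <= cos (dist (p, Delta))] since every point is within
   [2a/sqrt 3 < PI/2] of the lattice.  As [F] maps the two endpoints to
   antipodal points, every curve joining them has length at least [PI]. *)

(** * Lattice geometry *)

Lemma real_Glb_Rbar_bounds (E : R -> Prop) (lo x0 : R) :
  E x0 -> (forall x, E x -> lo <= x) ->
  lo <= real (Glb_Rbar E) /\ (forall x, E x -> real (Glb_Rbar E) <= x).
Proof.
  intros Hx0 Hlo.
  destruct (Glb_Rbar_correct E) as [Hlb Hglb].
  assert (Hup : Rbar_le (Glb_Rbar E) x0) by (apply Hlb; exact Hx0).
  assert (Hdown : Rbar_le lo (Glb_Rbar E)) by (apply Hglb; intros x Hx; apply Hlo, Hx).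
  revert Hup Hdown Hlb; destruct (Glb_Rbar E) as [g| |]; simpl; try contradiction.
  intros _ Hdown Hlb; split; [exact Hdown | intros x Hx; exact (Hlb x Hx)].
Qed.

Lemma real_Glb_Rbar_min (E : R -> Prop) (v : R) :
  E v -> (forall x, E x -> v <= x) -> real (Glb_Rbar E) = v.
Proof.
  intros Hv Hlo; destruct (real_Glb_Rbar_bounds E v v Hv Hlo) as [Hge Hle].
  specialize (Hle v Hv); lra.
Qed.

Lemma dist2_ge0 p q : 0 <= dist2 p q.
Proof. apply sqrt_pos. Qed.

Lemma dist_Delta_le a x y c : in_Delta a c -> dist_Delta a x y <= dist2 (x, y) c.
Proof.
  intro Hc.
  apply (real_Glb_Rbar_bounds _ 0 (dist2 (x, y) c)); [now exists c | | now exists c].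
  intros d [c' [_ ->]]; apply dist2_ge0.
Qed.

Lemma dist_Delta_ge0 a x y : 0 <= dist_Delta a x y.
Proof.
  apply (real_Glb_Rbar_bounds _ 0 (dist2 (x, y) (Delta_pt a 0 0))).
  - exists (Delta_pt a 0 0); split; [now exists 0%Z, 0%Z | reflexivity].
  - intros d [c' [_ ->]]; apply dist2_ge0.
Qed.

Lemma dist_Delta_Voronoi a x y c :
  in_Voronoi a c (x, y) -> dist_Delta a x y = dist2 (x, y) c.
Proof.
  intros [Hc Hmin]; apply real_Glb_Rbar_min; [now exists c |].
  intros d [c' [Hc' ->]]; apply Hmin, Hc'.
Qed.

Lemma sqrt3_sqr : sqrt 3 * sqrt 3 = 3.
Proof. apply sqrt_sqrt; lra. Qed.

Lemma sqrt3_gt0 : 0 < sqrt 3.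
Proof. apply sqrt_lt_R0; lra. Qed.

(* In the lattice basis the triangle [al, be >= 0, al + be <= 1] is covered by
   the discs of radius [2a/sqrt 3] around its vertices: the convex combination
   [W] of the three normalised squared distances is at most [1/3]. *)
Lemma hex_triangle_cover a s al be :
  0 < a -> s * s = 3 -> 0 <= al -> 0 <= be -> al + be <= 1 ->
  let X := 2 * a * al + a * be in let Y := a * s * be in
  X ^ 2 + Y ^ 2 <= 4 * a ^ 2 / 3 \/ (X - 2 * a) ^ 2 + Y ^ 2 <= 4 * a ^ 2 / 3 \/
  (X - a) ^ 2 + (Y - a * s) ^ 2 <= 4 * a ^ 2 / 3.
Proof.
  intros Ha Hs Hal Hbe Hab X Y; unfold X, Y.
  assert (E0 : (2*a*al + a*be)^2 + (a*s*be)^2 = 4*a^2*(al^2+al*be+be^2)) by nra.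
  assert (E1 : (2*a*al + a*be - 2*a)^2 + (a*s*be)^2
               = 4*a^2*((al-1)^2+(al-1)*be+be^2)) by nra.
  assert (E2 : (2*a*al + a*be - a)^2 + (a*s*be - a*s)^2
               = 4*a^2*(al^2+al*(be-1)+(be-1)^2)) by nra.
  rewrite E0, E1, E2.
  assert (Ha2 : 0 < a ^ 2) by nra.
  destruct (Rle_dec (al^2+al*be+be^2) (1/3)); [left; nra |].
  destruct (Rle_dec ((al-1)^2+(al-1)*be+be^2) (1/3)); [right; left; nra |].
  destruct (Rle_dec (al^2+al*(be-1)+(be-1)^2) (1/3)); [right; right; nra | exfalso].
  assert (W : (1-al-be)*(al^2+al*be+be^2) + al*((al-1)^2+(al-1)*be+be^2)
              + be*(al^2+al*(be-1)+(be-1)^2) = al + be - al^2 - al*be - be^2) by ring.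
  assert (al + be - al^2 - al*be - be^2 <= 1/3) by nra.
  nra.
Qed.

Lemma Delta_pt_shift a i j k l :
  Delta_pt a (i + k) (j + l)
  = (fst (Delta_pt a i j) + (2 * a * IZR k + a * IZR l),
     snd (Delta_pt a i j) + a * sqrt 3 * IZR l).
Proof. unfold Delta_pt; simpl; rewrite !plus_IZR; f_equal; ring. Qed.

Lemma floor_exists (x : R) : exists k : Z, IZR k <= x < IZR k + 1.
Proof.
  destruct (archimed x) as [H1 H2]; exists (up x - 1)%Z.
  rewrite minus_IZR; lra.
Qed.

Lemma Delta_covering a x y : 0 < a -> exists i j : Z,
  (x - fst (Delta_pt a i j)) ^ 2 + (y - snd (Delta_pt a i j)) ^ 2 <= 4 * a ^ 2 / 3.
Proof.
  intro Ha; set (s := sqrt 3).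
  assert (Hs : s * s = 3) by apply sqrt3_sqr.
  assert (Hs0 : 0 < s) by apply sqrt3_gt0.
  destruct (floor_exists (y / (a * s))) as [j0 Hj].
  set (be := y / (a * s) - IZR j0).
  destruct (floor_exists ((x - a * IZR j0 - a * be) / (2 * a))) as [i0 Hi].
  set (al := (x - a * IZR j0 - a * be) / (2 * a) - IZR i0).
  assert (Hal : 0 <= al < 1) by (unfold al; lra).
  assert (Hbe : 0 <= be < 1) by (unfold be; lra).
  assert (HX : x - fst (Delta_pt a i0 j0) = 2 * a * al + a * be)
    by (unfold al, be, Delta_pt; simpl; fold s; field; lra).
  assert (HY : y - snd (Delta_pt a i0 j0) = a * s * be)
    by (unfold be, Delta_pt; simpl; fold s; field; lra).
  assert (Hoff : forall k l : Z,
    (2 * a * al + a * be - (2 * a * IZR k + a * IZR l)) ^ 2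
    + (a * s * be - a * s * IZR l) ^ 2 <= 4 * a ^ 2 / 3 ->
    exists i j : Z,
      (x - fst (Delta_pt a i j)) ^ 2 + (y - snd (Delta_pt a i j)) ^ 2 <= 4 * a ^ 2 / 3).
  { intros k l H; exists (i0 + k)%Z, (j0 + l)%Z; rewrite Delta_pt_shift; cbn [fst snd].
    replace (x - (fst (Delta_pt a i0 j0) + (2 * a * IZR k + a * IZR l)))
      with (2 * a * al + a * be - (2 * a * IZR k + a * IZR l)) by (rewrite <- HX; ring).
    replace (y - (snd (Delta_pt a i0 j0) + a * sqrt 3 * IZR l))
      with (a * s * be - a * s * IZR l) by (rewrite <- HY; unfold s; ring).
    exact H. }
  destruct (Rle_dec (al + be) 1) as [Hab | Hab].
  - destruct (hex_triangle_cover a s al be Ha Hs ltac:(lra) ltac:(lra) Hab) as [H|[H|H]].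
    + apply (Hoff 0 0)%Z; simpl; nra.
    + apply (Hoff 1 0)%Z; simpl; nra.
    + apply (Hoff 0 1)%Z; simpl; nra.
  - destruct (hex_triangle_cover a s (1 - al) (1 - be) Ha Hs ltac:(lra) ltac:(lra) ltac:(lra))
      as [H|[H|H]].
    + apply (Hoff 1 1)%Z; simpl; nra.
    + apply (Hoff 0 1)%Z; simpl; nra.
    + apply (Hoff 1 0)%Z; simpl; nra.
Qed.

Lemma list_argmin {T} (f : T -> R) (l : list T) (x0 : T) :
  In x0 l -> exists c, In c l /\ forall d, In d l -> f c <= f d.
Proof.
  revert x0; induction l as [|h t IH]; intros x0 Hx0; [destruct Hx0 |].
  destruct t as [|h2 t2].
  - exists h; split; [now left | intros d [<- | []]; lra].
  - destruct (IH h2 (or_introl eq_refl)) as [c [Hc Hmin]].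
    destruct (Rle_dec (f h) (f c)).
    + exists h; split; [now left |].
      intros d [<- | Hd]; [lra | specialize (Hmin d Hd); lra].
    + exists c; split; [now right |].
      intros d [<- | Hd]; [lra | auto].
Qed.

Definition Delta_sqdist a (x y : R) (ij : Z * Z) :=
  (x - fst (Delta_pt a (fst ij) (snd ij))) ^ 2 + (y - snd (Delta_pt a (fst ij) (snd ij))) ^ 2.

Definition hex_offsets : list (Z * Z) :=
  ((0,0) :: (1,0) :: (-1,0) :: (0,1) :: (-1,1) :: (0,-1) :: (1,-1) :: nil)%Z.

(* Two lattice points within the covering radius of a common point are at
   distance at most [4a/sqrt 3 < 2a sqrt 3], so they are equal or adjacent. *)
Lemma Delta_close_offset a x y i0 j0 k l : 0 < a ->
  Delta_sqdist a x y (i0, j0) <= 4 * a ^ 2 / 3 ->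
  Delta_sqdist a x y ((i0 + k)%Z, (j0 + l)%Z) <= 4 * a ^ 2 / 3 ->
  In (k, l) hex_offsets.
Proof.
  intros Ha H0 H1; unfold Delta_sqdist in *; cbn [fst snd] in *.
  rewrite Delta_pt_shift in H1; cbn [fst snd] in H1.
  set (u1 := x - fst (Delta_pt a i0 j0)) in *.
  set (u2 := y - snd (Delta_pt a i0 j0)) in *.
  replace (x - (fst (Delta_pt a i0 j0) + (2 * a * IZR k + a * IZR l)))
    with (u1 - a * (2 * IZR k + IZR l)) in H1 by (unfold u1; ring).
  replace (y - (snd (Delta_pt a i0 j0) + a * sqrt 3 * IZR l))
    with (u2 - a * sqrt 3 * IZR l) in H1 by (unfold u2; ring).
  clearbody u1 u2.
  pose proof sqrt3_sqr as Hs.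
  assert (B : a ^ 2 * ((2 * IZR k + IZR l) ^ 2 + 3 * IZR l ^ 2) <= 16 * a ^ 2 / 3).
  { assert ((a * (2 * IZR k + IZR l)) ^ 2 <= 2 * (u1 - a * (2 * IZR k + IZR l)) ^ 2 + 2 * u1 ^ 2)
      by (pose proof (pow2_ge_0 (2 * u1 - a * (2 * IZR k + IZR l))); nra).
    assert ((a * sqrt 3 * IZR l) ^ 2 <= 2 * (u2 - a * sqrt 3 * IZR l) ^ 2 + 2 * u2 ^ 2)
      by (pose proof (pow2_ge_0 (2 * u2 - a * sqrt 3 * IZR l)); nra).
    assert ((a * sqrt 3 * IZR l) ^ 2 = a ^ 2 * (3 * IZR l ^ 2)) by (transitivity (a ^ 2 * ((sqrt 3 * sqrt 3) * IZR l ^ 2)); [ring | rewrite Hs; ring]).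
    nra. }
  assert (Hkl : ((2 * k + l) * (2 * k + l) + 3 * (l * l) < 6)%Z).
  { apply lt_IZR; rewrite !plus_IZR, !mult_IZR, !plus_IZR, !mult_IZR; simpl.
    assert (0 < a ^ 2) by nra.
    apply (Rmult_lt_reg_l (a ^ 2)); [assumption | nra]. }
  assert (Hl : (l = -1 \/ l = 0 \/ l = 1)%Z) by nia.
  destruct Hl as [-> | [-> | ->]];
    [ assert (Hk : (k = 0 \/ k = 1)%Z) by nia
    | assert (Hk : (k = -1 \/ k = 0 \/ k = 1)%Z) by nia
    | assert (Hk : (k = -1 \/ k = 0)%Z) by nia ];
    repeat destruct Hk as [-> | Hk]; subst; simpl; tauto.
Qed.

Lemma Voronoi_exists a x y : 0 < a -> exists c, in_Voronoi a c (x, y).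
Proof.
  intro Ha; destruct (Delta_covering a x y Ha) as [i0 [j0 H0]].
  set (cands := map (fun o => ((i0 + fst o)%Z, (j0 + snd o)%Z)) hex_offsets).
  destruct (list_argmin (Delta_sqdist a x y) cands (i0, j0)) as [[ic jc] [_ Hmin]].
  { unfold cands; simpl; left; f_equal; lia. }
  exists (Delta_pt a ic jc); split; [now exists ic, jc |].
  intros d [i [j ->]]; apply sqrt_le_1_alt.
  change (Delta_sqdist a x y (ic, jc) <= Delta_sqdist a x y (i, j)).
  destruct (Rle_dec (Delta_sqdist a x y (i, j)) (4 * a ^ 2 / 3)) as [Hle | Hgt].
  - apply Hmin; unfold cands; apply in_map_iff; exists ((i - i0)%Z, (j - j0)%Z).
    split; [simpl; f_equal; lia |].
    apply (Delta_close_offset a x y i0 j0); [assumption | exact H0 |].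
    replace (i0 + (i - i0))%Z with i by lia; replace (j0 + (j - j0))%Z with j by lia.
    exact Hle.
  - assert (Delta_sqdist a x y (ic, jc) <= Delta_sqdist a x y (i0, j0))
      by (apply Hmin; unfold cands; simpl; left; f_equal; lia).
    unfold Delta_sqdist in *; cbn [fst snd] in *; lra.
Qed.

(* The reflection [2c - d] of a lattice point [d] through the centre [c] is a
   lattice point, and the two comparisons with [d] and [2c - d] are affine in
   the radial parameter; their convex combinations give every [|s| <= r]. *)
Lemma Voronoi_radial_segment a c1 c2 u1 u2 r s :
  in_Voronoi a (c1, c2) (c1 + r * u1, c2 + r * u2) -> - r <= s <= r ->
  in_Voronoi a (c1, c2) (c1 + s * u1, c2 + s * u2).
Proof.
  intros [[ic [jc Hc]] Hmin] Hs; split; [now exists ic, jc |].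
  intros d [i [j ->]].
  pose proof (Hmin _ (ex_intro _ i (ex_intro _ j eq_refl))) as H1.
  pose proof (Hmin (Delta_pt a (2 * ic - i) (2 * jc - j))
                (ex_intro _ _ (ex_intro _ _ eq_refl))) as H2.
  unfold dist2, Delta_pt in *; cbn [fst snd] in *.
  apply sqrt_le_0 in H1; try (apply Rplus_le_le_0_compat; apply pow2_ge_0).
  apply sqrt_le_0 in H2; try (apply Rplus_le_le_0_compat; apply pow2_ge_0).
  apply sqrt_le_1_alt.
  injection Hc as Hc1 Hc2; rewrite !minus_IZR, !mult_IZR in H2.
  set (e1 := c1 - (2 * a * IZR i + a * IZR j)) in *.
  set (e2 := c2 - a * sqrt 3 * IZR j) in *.
  assert (Fd : 0 <= e1 ^ 2 + e2 ^ 2 + 2 * r * (u1 * e1 + u2 * e2)).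
  { replace (c1 + r * u1 - (2 * a * IZR i + a * IZR j)) with (e1 + r * u1) in H1
      by (unfold e1; ring).
    replace (c2 + r * u2 - a * sqrt 3 * IZR j) with (e2 + r * u2) in H1 by (unfold e2; ring).
    nra. }
  assert (Fd' : 0 <= e1 ^ 2 + e2 ^ 2 - 2 * r * (u1 * e1 + u2 * e2)).
  { replace (c1 + r * u1 - (2 * a * (2 * IZR ic - IZR i) + a * (2 * IZR jc - IZR j)))
      with (r * u1 - e1) in H2 by (unfold e1; rewrite Hc1; ring).
    replace (c2 + r * u2 - a * sqrt 3 * (2 * IZR jc - IZR j)) with (r * u2 - e2) in H2
      by (unfold e2; rewrite Hc2; ring).
    nra. }
  replace (c1 + s * u1 - (2 * a * IZR i + a * IZR j)) with (e1 + s * u1) by (unfold e1; ring).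
  replace (c2 + s * u2 - a * sqrt 3 * IZR j) with (e2 + s * u2) by (unfold e2; ring).
  clearbody e1 e2.
  assert (Fs : 0 <= e1 ^ 2 + e2 ^ 2 + 2 * s * (u1 * e1 + u2 * e2)).
  { destruct (Req_dec r 0) as [Hr0 | Hr0]; [replace s with 0 by lra; nra |].
    assert (0 <= 2 * r * (e1 ^ 2 + e2 ^ 2 + 2 * s * (u1 * e1 + u2 * e2))); [| nra].
    replace (2 * r * (e1 ^ 2 + e2 ^ 2 + 2 * s * (u1 * e1 + u2 * e2))) with
      ((r + s) * (e1 ^ 2 + e2 ^ 2 + 2 * r * (u1 * e1 + u2 * e2))
       + (r - s) * (e1 ^ 2 + e2 ^ 2 - 2 * r * (u1 * e1 + u2 * e2))) by ring.
    apply Rplus_le_le_0_compat; apply Rmult_le_pos; lra. }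
  nra.
Qed.

Lemma dist_Delta_le_covering_radius a x y : 0 < a -> dist_Delta a x y <= 2 * a / sqrt 3.
Proof.
  intro Ha; destruct (Delta_covering a x y Ha) as [i [j H]].
  eapply Rle_trans; [apply (dist_Delta_le a x y (Delta_pt a i j)); now exists i, j |].
  pose proof sqrt3_gt0; pose proof sqrt3_sqr.
  rewrite <- (sqrt_pow2 (2 * a / sqrt 3))
    by (apply Rmult_le_pos; [lra | apply Rlt_le, Rinv_0_lt_compat; lra]).
  apply sqrt_le_1_alt.
  replace ((2 * a / sqrt 3) ^ 2) with (4 * a ^ 2 / 3); [exact H |].
  field_simplify; [| lra]; replace (sqrt 3 ^ 2) with 3 by (simpl; lra); field.
Qed.

Lemma polar_decomposition x y c1 c2 : exists u1 u2, u1 ^ 2 + u2 ^ 2 = 1 /\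
  x = c1 + dist2 (x, y) (c1, c2) * u1 /\ y = c2 + dist2 (x, y) (c1, c2) * u2.
Proof.
  set (r := dist2 (x, y) (c1, c2)).
  assert (Hr2 : r ^ 2 = (x - c1) ^ 2 + (y - c2) ^ 2).
  { unfold r, dist2; cbn [fst snd]; rewrite <- Rsqr_pow2; apply Rsqr_sqrt.
    apply Rplus_le_le_0_compat; apply pow2_ge_0. }
  destruct (Req_dec r 0) as [H0 | H0].
  - exists 1, 0; rewrite H0 in *; split; [ring |].
    pose proof (pow2_ge_0 (x - c1)); pose proof (pow2_ge_0 (y - c2)).
    split; nra.
  - exists ((x - c1) / r), ((y - c2) / r); split; [| split; field; auto].
    replace (((x - c1) / r) ^ 2 + ((y - c2) / r) ^ 2)
      with (((x - c1) ^ 2 + (y - c2) ^ 2) / r ^ 2) by (field; auto).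
    rewrite <- Hr2; field; auto.
Qed.

(** * Great half-circles *)

Lemma is_derive_asin x : -1 < x < 1 -> is_derive asin x (/ sqrt (1 - x ^ 2)).
Proof.
  intro Hx; apply is_derive_Reals, (derive_pt_eq_1 _ _ _ (derivable_pt_asin x Hx)).
  rewrite derive_pt_asin; unfold Rsqr; replace (x * x) with (x ^ 2) by ring.
  field; apply Rgt_not_eq, sqrt_lt_R0; nra.
Qed.

Lemma ex_derive_continuous_R (f : R -> R) x : ex_derive f x -> continuous f x.
Proof. exact (@ex_derive_continuous R_AbsRing R_NormedModule f x). Qed.

Lemma is_derive_affine_comp (g : R -> R) c u t dg :
  is_derive g t dg -> is_derive (fun t => c + g t * u) t (dg * u).
Proof.
  intro H; auto_derive; [now exists dg |].
  change (fun x : R => g x) with g; rewrite (is_derive_unique _ _ _ H); ring.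
Qed.

Lemma C1_intro (f f' : R -> R) :
  (forall t, is_derive f t (f' t)) -> (forall t, continuous f' t) -> Defs.C1 f.
Proof.
  intros Hd Hc; split; [intro t; now exists (f' t) |].
  intro t; apply (continuous_ext f'); [| apply Hc].
  intro u; symmetry; apply is_derive_unique, Hd.
Qed.

(* In latitude/longitude coordinates [(s, z)] the metric [ds^2 + cos^2 s dz^2]
   is the round metric of the unit sphere.  The great half-circle from
   [(r, z0)] to the antipodal point [(-r, z0 + PI)], run at speed [PI], has
   [sin s = sin r cos (PI t)] and [tan (z - z0) = tan (PI t) / cos r]; the
   [atan] term is [atan (tan (PI t) / cos r) - PI t] written so that it stays
   continuous through [t = 1/2]. *)
Section GreatCircle.
Variables (r z0 : R).
Hypothesis Hr : 0 <= r < PI / 2.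

Definition gc_sin t := sin r * cos (PI * t).
Definition gc_lat t := asin (gc_sin t).
Definition gc_lon t := z0 + PI * t
  + atan ((/ cos r - 1) * sin (PI * t) * cos (PI * t)
          / (cos (PI * t) ^ 2 + / cos r * sin (PI * t) ^ 2)).
Definition gc_lat' t := - PI * sin r * sin (PI * t) / sqrt (1 - gc_sin t ^ 2).
Definition gc_lon' t := PI * cos r / (1 - gc_sin t ^ 2).

Lemma cos_r_gt0 : 0 < cos r.
Proof. apply cos_gt_0; lra. Qed.

Lemma sin_r_bounds : 0 <= sin r < 1.
Proof.
  split; [apply sin_ge_0; lra |].
  pose proof (sin2_cos2 r); pose proof cos_r_gt0; pose proof (SIN_bound r).
  unfold Rsqr in *; destruct (Req_dec (sin r) 1); [nra | lra].
Qed.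

Lemma gc_sin_sqr_le t : gc_sin t ^ 2 <= sin r ^ 2.
Proof.
  unfold gc_sin; pose proof (COS_bound (PI * t)); pose proof sin_r_bounds.
  assert (cos (PI * t) ^ 2 <= 1) by nra; nra.
Qed.

Lemma one_minus_gc_sin_sqr_gt0 t : 0 < 1 - gc_sin t ^ 2.
Proof. pose proof (gc_sin_sqr_le t); pose proof sin_r_bounds; nra. Qed.

Lemma gc_sin_bounds t : -1 < gc_sin t < 1.
Proof. pose proof (one_minus_gc_sin_sqr_gt0 t); split; nra. Qed.

Lemma is_derive_gc_lat t : is_derive gc_lat t (gc_lat' t).
Proof.
  assert (Hw : is_derive gc_sin t (- PI * sin r * sin (PI * t)))
    by (unfold gc_sin; auto_derive; [auto | ring]).
  exact (is_derive_comp asin gc_sin t _ _ (is_derive_asin _ (gc_sin_bounds t)) Hw).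
Qed.

Lemma is_derive_gc_lon t : is_derive gc_lon t (gc_lon' t).
Proof.
  unfold gc_lon, gc_lon', gc_sin.
  pose proof cos_r_gt0 as Hc; pose proof sin_r_bounds as Hs.
  pose proof (sin2_cos2 r) as Er; pose proof (sin2_cos2 (PI * t)) as Et; unfold Rsqr in *.
  set (A := / cos r).
  assert (HA : 1 <= A).
  { unfold A; rewrite <- Rinv_1; apply Rinv_le_contravar; [lra |].
    pose proof (COS_bound r); lra. }
  assert (HAc : A * cos r = 1) by (unfold A; field; lra).
  assert (Hd : 0 < cos (PI * t) ^ 2 + A * sin (PI * t) ^ 2) by nra.
  assert (HE : 0 < cos (PI * t) ^ 2 + A ^ 2 * sin (PI * t) ^ 2) by nra.
  auto_derive; [intro; nra |].
  set (C := cos (PI * t)) in *; set (S := sin (PI * t)) in *; clearbody C S.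
  assert (E : 1 - (sin r * C) ^ 2 = cos r ^ 2 * (C ^ 2 + A ^ 2 * S ^ 2)).
  { replace (cos r ^ 2 * (C ^ 2 + A ^ 2 * S ^ 2))
      with (cos r ^ 2 * C ^ 2 + (A * cos r) ^ 2 * S ^ 2) by ring.
    rewrite HAc; nra. }
  rewrite E.
  transitivity (PI * ((C^2 + A^2 * S^2) * (C^2 + S^2)
                      + (A - 1) * ((C^2 - S^2) * (C^2 + A * S^2) - 2 * (A - 1) * S^2 * C^2))
                / ((C^2 + A^2 * S^2) * (C^2 + S^2))).
  { field; split; nra. }
  replace ((C^2 + A^2 * S^2) * (C^2 + S^2)
           + (A - 1) * ((C^2 - S^2) * (C^2 + A * S^2) - 2 * (A - 1) * S^2 * C^2))
    with (A * (C^2 + S^2) ^ 2) by ring.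
  replace (C ^ 2 + S ^ 2) with 1 by lra.
  unfold A in *; field; split; [lra | nra].
Qed.

Lemma gc_lat'_continuous t : continuous gc_lat' t.
Proof.
  apply ex_derive_continuous_R; pose proof (one_minus_gc_sin_sqr_gt0 t).
  unfold gc_lat', gc_sin in *; auto_derive.
  repeat split; try lra; apply Rgt_not_eq, sqrt_lt_R0; lra.
Qed.

Lemma gc_lon'_continuous t : continuous gc_lon' t.
Proof.
  apply ex_derive_continuous_R; pose proof (one_minus_gc_sin_sqr_gt0 t).
  unfold gc_lon', gc_sin in *; auto_derive; lra.
Qed.

Lemma gc_lat_bounds t : - r <= gc_lat t <= r.
Proof.
  unfold gc_lat.
  pose proof (gc_sin_sqr_le t); pose proof sin_r_bounds; pose proof PI_RGT_0.
  pose proof (asin_bound (gc_sin t)).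
  assert (Hs : sin (asin (gc_sin t)) = gc_sin t)
    by (apply sin_asin; pose proof (gc_sin_bounds t); lra).
  split.
  - destruct (Rle_dec (- r) (asin (gc_sin t))) as [| Hn]; [assumption | exfalso].
    assert (sin (asin (gc_sin t)) < sin (- r)) by (apply sin_increasing_1; lra).
    rewrite sin_neg, Hs in *; nra.
  - destruct (Rle_dec (asin (gc_sin t)) r) as [| Hn]; [assumption | exfalso].
    assert (sin r < sin (asin (gc_sin t))) by (apply sin_increasing_1; lra).
    rewrite Hs in *; nra.
Qed.

Lemma gc_lat_0 : gc_lat 0 = r.
Proof.
  unfold gc_lat, gc_sin; rewrite Rmult_0_r, cos_0, Rmult_1_r.
  apply asin_sin; pose proof PI_RGT_0; lra.
Qed.

Lemma gc_lat_1 : gc_lat 1 = - r.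
Proof.
  unfold gc_lat, gc_sin; rewrite Rmult_1_r, cos_PI.
  replace (sin r * -1) with (- sin r) by ring.
  rewrite asin_opp, asin_sin; [ring | pose proof PI_RGT_0; lra].
Qed.

Lemma gc_lon_0 : gc_lon 0 = z0.
Proof.
  unfold gc_lon; rewrite Rmult_0_r, sin_0, cos_0.
  replace ((/ cos r - 1) * 0 * 1 / (1 ^ 2 + / cos r * 0 ^ 2)) with 0 by (unfold Rdiv; ring).
  rewrite atan_0; ring.
Qed.

Lemma gc_lon_1 : gc_lon 1 = z0 + PI.
Proof.
  unfold gc_lon; rewrite Rmult_1_r, sin_PI, cos_PI.
  replace ((/ cos r - 1) * 0 * -1 / ((-1) ^ 2 + / cos r * 0 ^ 2)) with 0 by (unfold Rdiv; ring).
  rewrite atan_0; ring.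
Qed.

Lemma gc_speed t : gc_lat' t ^ 2 + cos (gc_lat t) ^ 2 * gc_lon' t ^ 2 = PI ^ 2.
Proof.
  unfold gc_lat; rewrite cos_asin by (pose proof (gc_sin_bounds t); lra).
  unfold gc_lat', gc_lon', Rsqr.
  pose proof (one_minus_gc_sin_sqr_gt0 t) as H.
  replace (1 - gc_sin t * gc_sin t) with (1 - gc_sin t ^ 2) by ring.
  assert (E : (PI * sin r * sin (PI * t)) ^ 2 + PI ^ 2 * cos r ^ 2 = PI ^ 2 * (1 - gc_sin t ^ 2)).
  { unfold gc_sin; pose proof (sin2_cos2 r); pose proof (sin2_cos2 (PI * t)).
    unfold Rsqr in *.
    transitivity (PI ^ 2 * (sin r ^ 2 * sin (PI * t) ^ 2 + cos r ^ 2)); [ring |].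
    replace (sin (PI * t) ^ 2) with (1 - cos (PI * t) ^ 2) by nra.
    replace (cos r ^ 2) with (1 - sin r ^ 2) by nra; ring. }
  set (Q := 1 - gc_sin t ^ 2) in *.
  assert (HQ : sqrt Q ^ 2 = Q) by (rewrite <- Rsqr_pow2; apply Rsqr_sqrt; lra).
  assert (HQ0 : sqrt Q <> 0) by (apply Rgt_not_eq, sqrt_lt_R0; lra).
  replace ((- PI * sin r * sin (PI * t) / sqrt Q) ^ 2)
    with ((PI * sin r * sin (PI * t)) ^ 2 / sqrt Q ^ 2) by (field; auto).
  rewrite HQ.
  replace (sqrt Q ^ 2 * (PI * cos r / Q) ^ 2) with (PI ^ 2 * cos r ^ 2 / Q)
    by (rewrite HQ; field; lra).
  transitivity (((PI * sin r * sin (PI * t)) ^ 2 + PI ^ 2 * cos r ^ 2) / Q); [field; lra |].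
  rewrite E; field; lra.
Qed.
End GreatCircle.

Lemma ps_curve_length_C1 a fx fy fz L :
  Defs.C1 fx -> Defs.C1 fy -> Defs.C1 fz ->
  is_RInt (fun t => h_speed a (fx t, fy t, fz t) (Derive fx t, Derive fy t, Derive fz t)) 0 1 L ->
  ps_curve_length a (fun t => (fx t, fy t, fz t)) L.
Proof.
  intros Cx Cy Cz HI.
  exists 1%nat, (fun i => match i with O => 0 | _ => 1 end), (fun _ => L).
  split; [reflexivity |]; split; [reflexivity |]; split.
  - intros i Hi; replace i with 0%nat by lia; lra.
  - split; [| simpl; now rewrite Rplus_0_l].
    intros i Hi; replace i with 0%nat by lia.
    exists fx, fy, fz; simpl; do 3 (split; [assumption |]); split; [reflexivity | exact HI].
Qed.

Lemma h_speed_radial a c1 c2 u1 u2 s z ds dz :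
  u1 ^ 2 + u2 ^ 2 = 1 -> in_Voronoi a (c1, c2) (c1 + s * u1, c2 + s * u2) ->
  h_speed a (c1 + s * u1, c2 + s * u2, z) (ds * u1, ds * u2, dz)
  = sqrt (ds ^ 2 + cos s ^ 2 * dz ^ 2).
Proof.
  intros Hu Hv; unfold h_speed, px, py, pz; cbn [fst snd].
  rewrite (dist_Delta_Voronoi _ _ _ _ Hv).
  assert (Hd : dist2 (c1 + s * u1, c2 + s * u2) (c1, c2) = Rabs s).
  { unfold dist2; cbn [fst snd].
    replace ((c1 + s * u1 - c1) ^ 2 + (c2 + s * u2 - c2) ^ 2) with (s ^ 2 * (u1 ^ 2 + u2 ^ 2))
      by ring.
    rewrite Hu, Rmult_1_r, <- Rsqr_pow2; apply sqrt_Rsqr_abs. }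
  rewrite Hd.
  replace (cos (Rabs s)) with (cos s)
    by (unfold Rabs; destruct (Rcase_abs s); [symmetry; apply cos_neg | reflexivity]).
  f_equal; replace ((ds * u1) ^ 2 + (ds * u2) ^ 2) with (ds ^ 2 * (u1 ^ 2 + u2 ^ 2)) by ring.
  rewrite Hu; ring.
Qed.

Theorem Voronoi_half_plane_geodesic a (ha : 0 < a) (hsmall : 2 * a / sqrt 3 < PI / 2)
    (x y z0 : R) (c : R * R) :
  in_Voronoi a c (x, y) ->
  exists u : R * R,
    fst u ^ 2 + snd u ^ 2 = 1 /\
    (x, y) = (fst c + dist2 (x, y) c * fst u, snd c + dist2 (x, y) c * snd u) /\
    exists g : R -> R3,
      curve_T a g (x, y, z0) (sigma_hex (x, y, z0)) PI /\
      forall t, 0 <= t <= 1 ->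
        in_Voronoi a c (px (g t), py (g t)) /\
        exists s : R, (px (g t), py (g t)) = (fst c + s * fst u, snd c + s * snd u).
Proof.
  intro Hv; destruct c as [c1 c2].
  destruct (polar_decomposition x y c1 c2) as [u1 [u2 [Hu [Hx Hy]]]].
  set (r := dist2 (x, y) (c1, c2)) in *.
  assert (Hr : 0 <= r < PI / 2).
  { split; [apply dist2_ge0 |].
    unfold r; rewrite <- (dist_Delta_Voronoi a x y _ Hv).
    pose proof (dist_Delta_le_covering_radius a x y ha); lra. }
  exists (u1, u2); cbn [fst snd]; split; [exact Hu |]; split; [now rewrite <- Hx, <- Hy |].
  set (fx := fun t => c1 + gc_lat r t * u1).
  set (fy := fun t => c2 + gc_lat r t * u2).
  assert (Dx : forall t, is_derive fx t (gc_lat' r t * u1))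
    by (intro t; apply is_derive_affine_comp, is_derive_gc_lat; assumption).
  assert (Dy : forall t, is_derive fy t (gc_lat' r t * u2))
    by (intro t; apply is_derive_affine_comp, is_derive_gc_lat; assumption).
  assert (Dz : forall t, is_derive (gc_lon r z0) t (gc_lon' r t))
    by (intro t; apply is_derive_gc_lon; assumption).
  assert (Hvt : forall t, in_Voronoi a (c1, c2) (fx t, fy t)).
  { intro t; apply (Voronoi_radial_segment a c1 c2 u1 u2 r); [now rewrite <- Hx, <- Hy |].
    apply gc_lat_bounds; assumption. }
  exists (fun t => (fx t, fy t, gc_lon r z0 t)); split.
  - destruct Hv as [[ic [jc Hc]] _]; injection Hc as Hc1 Hc2; unfold Delta_pt in *.
    exists (4 * a * IZR ic + 2 * a * IZR jc, 2 * a * sqrt 3 * IZR jc, 2 * PI * IZR 0).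
    split; [now exists ic, jc, 0%Z |].
    split; [| split].
    { unfold fx, fy; rewrite gc_lat_0, gc_lon_0 by assumption.
      apply pair_equal_spec; split; [apply pair_equal_spec; split |]; lra. }
    { unfold fx, fy, add3, sigma_hex, px, py, pz; cbn [fst snd].
      rewrite gc_lat_1, gc_lon_1 by assumption.
      apply pair_equal_spec; split; [apply pair_equal_spec; split |]; lra. }
    apply ps_curve_length_C1.
    + apply (C1_intro fx _ Dx); intro t.
      apply (continuous_mult (gc_lat' r) (fun _ => u1));
        [apply gc_lat'_continuous; assumption | apply continuous_const].
    + apply (C1_intro fy _ Dy); intro t.
      apply (continuous_mult (gc_lat' r) (fun _ => u2));
        [apply gc_lat'_continuous; assumption | apply continuous_const].
    + apply (C1_intro _ _ Dz); intro t; apply gc_lon'_continuous; assumption.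
    + apply (is_RInt_ext (fun _ => PI)).
      * intros t _.
        rewrite (is_derive_unique _ _ _ (Dx t)), (is_derive_unique _ _ _ (Dy t)),
          (is_derive_unique _ _ _ (Dz t)).
        unfold fx, fy; rewrite h_speed_radial by (assumption || apply Hvt).
        rewrite gc_speed by assumption.
        symmetry; apply sqrt_pow2; pose proof PI_RGT_0; lra.
      * pose proof (is_RInt_const 0 1 PI) as HI.
        change (scal (1 - 0) PI) with ((1 - 0) * PI) in HI.
        replace ((1 - 0) * PI) with PI in HI by ring.
        exact HI.
  - intros t _; split; [apply Hvt | now exists (gc_lat r t)].
Qed.

(** * A 1-Lipschitz map to the 3-sphere *)

Lemma continuous_Rplus (f g : R -> R) x :
  continuous f x -> continuous g x -> continuous (fun y => f y + g y) x.
Proof. apply (continuous_plus f g). Qed.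
Lemma continuous_Rmult (f g : R -> R) x :
  continuous f x -> continuous g x -> continuous (fun y => f y * g y) x.
Proof. apply (continuous_mult f g). Qed.
Lemma continuous_Ropp (f : R -> R) x : continuous f x -> continuous (fun y => - f y) x.
Proof. apply (continuous_opp f). Qed.
Lemma continuous_Rminus (f g : R -> R) x :
  continuous f x -> continuous g x -> continuous (fun y => f y - g y) x.
Proof. apply (continuous_minus f g). Qed.
Lemma continuous_Rdiv (f g : R -> R) x :
  continuous f x -> continuous g x -> g x <> 0 -> continuous (fun y => f y / g y) x.
Proof.
  intros; apply (continuous_Rmult f (fun y => / g y)); [assumption |].
  apply continuous_Rinv_comp; assumption.
Qed.
Lemma continuous_pow_comp (f : R -> R) n x :
  continuous f x -> continuous (fun y => f y ^ n) x.
Proof.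
  intro H; induction n as [| n IH]; [apply continuous_const |].
  apply (continuous_Rmult f (fun y => f y ^ n)); assumption.
Qed.
Lemma continuous_comp_R (f h : R -> R) x :
  continuous f x -> continuous h (f x) -> continuous (fun y => h (f y)) x.
Proof. apply (continuous_comp f h). Qed.

Ltac continuity_step := match goal with
| |- continuous (fun _ => ?c) _ => apply continuous_const
| |- continuous (fun y => y) _ => apply continuous_id
| |- continuous (fun y => @?f y + @?g y) _ => apply (continuous_Rplus f g)
| |- continuous (fun y => @?f y - @?g y) _ => apply (continuous_Rminus f g)
| |- continuous (fun y => @?f y * @?g y) _ => apply (continuous_Rmult f g)
| |- continuous (fun y => @?f y / @?g y) _ => apply (continuous_Rdiv f g)
| |- continuous (fun y => - @?f y) _ => apply (continuous_Ropp f)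
| |- continuous (fun y => / @?f y) _ => apply (continuous_Rinv_comp f)
| |- continuous (fun y => sqrt (@?f y)) _ => apply (continuous_sqrt_comp f)
| |- continuous (fun y => cos (@?f y)) _ => apply (continuous_cos_comp f)
| |- continuous (fun y => sin (@?f y)) _ => apply (continuous_sin_comp f)
| |- continuous (fun y => @?f y ^ ?n) _ => apply (continuous_pow_comp f n)
end.

(* [cos_sqrt_series q = cos (sqrt q)] and [sinc_sqrt_series q = sin (sqrt q) / sqrt q]
   for [q > 0]; as power series in [q] they are smooth through [q = 0]. *)
Definition cos_sqrt_series q := PSeries cos_n q.
Definition sinc_sqrt_series q := PSeries sin_n q.
Definition cos_sqrt_series' q := PSeries (PS_derive cos_n) q.
Definition sinc_sqrt_series' q := PSeries (PS_derive sin_n) q.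

Lemma CV_radius_cos_n : CV_radius cos_n = p_infty.
Proof.
  apply CV_radius_infinite_DAlembert; [apply cosn_no_R0 |].
  apply is_lim_seq_Reals; exact Alembert_cos.
Qed.

Lemma CV_radius_sin_n : CV_radius sin_n = p_infty.
Proof.
  apply CV_radius_infinite_DAlembert; [apply sin_no_R0 |].
  apply is_lim_seq_Reals; exact Alembert_sin.
Qed.

Lemma is_derive_cos_sqrt_series q : is_derive cos_sqrt_series q (cos_sqrt_series' q).
Proof. apply is_derive_PSeries; rewrite CV_radius_cos_n; exact I. Qed.

Lemma is_derive_sinc_sqrt_series q : is_derive sinc_sqrt_series q (sinc_sqrt_series' q).
Proof. apply is_derive_PSeries; rewrite CV_radius_sin_n; exact I. Qed.

Lemma cos_sqrt_series'_continuous q : continuous cos_sqrt_series' q.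
Proof.
  apply ex_derive_continuous_R; exists (PSeries (PS_derive (PS_derive cos_n)) q).
  apply is_derive_PSeries; rewrite CV_radius_derive, CV_radius_cos_n; exact I.
Qed.

Lemma sinc_sqrt_series'_continuous q : continuous sinc_sqrt_series' q.
Proof.
  apply ex_derive_continuous_R; exists (PSeries (PS_derive (PS_derive sin_n)) q).
  apply is_derive_PSeries; rewrite CV_radius_derive, CV_radius_sin_n; exact I.
Qed.

Lemma cos_sqrt_series_sqr x : cos_sqrt_series (x ^ 2) = cos x.
Proof.
  apply is_pseries_unique, is_pseries_Reals.
  unfold cos; destruct (exist_cos (Rsqr x)) as [l Hl].
  replace (x ^ 2) with (Rsqr x) by (unfold Rsqr; ring); exact Hl.
Qed.

Lemma sinc_sqrt_series_sqr x : x * sinc_sqrt_series (x ^ 2) = sin x.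
Proof.
  unfold sin; destruct (exist_sin (Rsqr x)) as [l Hl].
  f_equal; apply is_pseries_unique, is_pseries_Reals.
  replace (x ^ 2) with (Rsqr x) by (unfold Rsqr; ring); exact Hl.
Qed.

Lemma cos_sqrt_series_0 : cos_sqrt_series 0 = 1.
Proof. unfold cos_sqrt_series; rewrite PSeries_0; unfold cos_n; simpl; field. Qed.

Lemma sinc_sqrt_series_0 : sinc_sqrt_series 0 = 1.
Proof. unfold sinc_sqrt_series; rewrite PSeries_0; unfold sin_n; simpl; field. Qed.

Definition atan_ramp x := x - (Rmax 0 x - atan (Rmax 0 x)).
Definition atan_ramp' x := / (1 + Rmax 0 x ^ 2).

Lemma atan_ramp_nonpos x : x <= 0 -> atan_ramp x = x.
Proof. intro H; unfold atan_ramp; rewrite Rmax_left, atan_0 by lra; ring. Qed.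

Lemma atan_ramp_nonneg x : 0 <= x -> atan_ramp x = atan x.
Proof. intro H; unfold atan_ramp; rewrite Rmax_right by lra; ring. Qed.

Lemma atan_ramp'_bounds x : 0 < atan_ramp' x <= 1.
Proof.
  unfold atan_ramp'; pose proof (pow2_ge_0 (Rmax 0 x)); split.
  - apply Rinv_0_lt_compat; lra.
  - rewrite <- Rinv_1; apply Rinv_le_contravar; lra.
Qed.

Lemma atan_ramp'_continuous x : continuous atan_ramp' x.
Proof.
  assert (Hmax : forall y, continuous (Rmax 0) y).
  { intro y; apply (continuous_ext (fun y => (y + Rabs y) / 2)).
    { intro u; unfold Rmax, Rabs; destruct (Rle_dec 0 u); destruct (Rcase_abs u); lra. }
    repeat continuity_step; [apply continuous_Rabs | lra]. }
  unfold atan_ramp'; pose proof (pow2_ge_0 (Rmax 0 x)).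
  repeat continuity_step; [apply Hmax | lra].
Qed.

Lemma is_derive_atan_ramp x : is_derive atan_ramp x (atan_ramp' x).
Proof.
  destruct (Rtotal_order x 0) as [Hx | [Hx | Hx]].
  - apply (is_derive_ext_loc (fun y => y)).
    + apply (filter_imp (fun y => y < 0)); [| apply (open_lt 0 x Hx)].
      intros y Hy; symmetry; apply atan_ramp_nonpos; lra.
    + unfold atan_ramp'; rewrite Rmax_left by lra.
      replace (/ (1 + 0 ^ 2)) with 1 by (simpl; field); auto_derive; auto; ring.
  - subst x; apply is_derive_Reals; intros eps Heps.
    destruct (proj1 (is_derive_Reals _ _ _) (is_derive_atan 0) eps Heps) as [del Hdel].
    exists del; intros h Hh0 Hh.
    unfold atan_ramp'; rewrite Rmax_left, (atan_ramp_nonpos 0), Rplus_0_l by lra.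
    replace (/ (1 + 0 ^ 2)) with 1 by (simpl; field).
    destruct (Rle_dec h 0) as [Hn | Hp].
    + rewrite atan_ramp_nonpos by lra.
      replace ((h - 0) / h - 1) with 0 by (field; auto); rewrite Rabs_R0; lra.
    + rewrite atan_ramp_nonneg by lra; specialize (Hdel h Hh0 Hh).
      rewrite atan_0, Rplus_0_l in Hdel.
      replace (/ (1 + 0²)) with 1 in Hdel by (unfold Rsqr; field); exact Hdel.
  - apply (is_derive_ext_loc atan).
    + apply (filter_imp (fun y => 0 < y)); [| apply (open_gt 0 x Hx)].
      intros y Hy; symmetry; apply atan_ramp_nonneg; lra.
    + unfold atan_ramp'; rewrite Rmax_right by lra.
      replace (/ (1 + x ^ 2)) with (/ (1 + x²)) by (unfold Rsqr; f_equal; ring).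
      apply is_derive_atan.
Qed.

Definition glue (f g : R -> R) q := if Rlt_dec q 1 then f q else g q.

Section Glue.
Variables f f' g g' : R -> R.
Hypothesis f_der : forall q, is_derive f q (f' q).
Hypothesis g_der : forall q, 0 < q -> is_derive g q (g' q).
Hypothesis f_eq_g : forall q, 0 < q < 1 -> f q = g q.

Lemma locally_unit_interval q : 0 < q < 1 -> locally q (fun y => 0 < y < 1).
Proof. intro Hq; apply filter_and; [apply (open_gt 0 q) | apply (open_lt 1 q)]; lra. Qed.

Lemma glue_pos q : 0 < q -> glue f g q = g q /\ glue f' g' q = g' q.
Proof.
  intro Hq; unfold glue; destruct (Rlt_dec q 1) as [H1 | H1]; [| tauto].
  split; [apply f_eq_g; lra |].
  assert (H : is_derive f q (g' q)).
  { apply (is_derive_ext_loc g); [| apply g_der, Hq].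
    apply (filter_imp (fun y => 0 < y < 1)); [| apply locally_unit_interval; lra].
    intros y Hy; symmetry; apply f_eq_g, Hy. }
  rewrite <- (is_derive_unique _ _ _ H); symmetry; apply is_derive_unique, f_der.
Qed.

Lemma locally_glue_left q h k : q < 1 -> locally q (fun y => glue h k y = h y).
Proof.
  intro Hq; apply (filter_imp (fun y => y < 1)); [| apply (open_lt 1 q Hq)].
  intros y Hy; unfold glue; destruct (Rlt_dec y 1); [reflexivity | lra].
Qed.

Lemma is_derive_glue q : is_derive (glue f g) q (glue f' g' q).
Proof.
  destruct (Rlt_dec q 1) as [H | H].
  - apply (is_derive_ext_loc f).
    + apply (filter_imp (fun y => glue f g y = f y)); [now intros y -> |].
      apply locally_glue_left, H.
    + unfold glue; destruct (Rlt_dec q 1); [apply f_der | lra].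
  - apply (is_derive_ext_loc g).
    + apply (filter_imp (fun y => 1 / 2 < y)); [| apply (open_gt (1 / 2) q); lra].
      intros y Hy; symmetry; apply glue_pos; lra.
    + destruct (glue_pos q ltac:(lra)) as [_ ->]; apply g_der; lra.
Qed.

Lemma glue_continuous q :
  (forall q, continuous f' q) -> (forall q, 0 < q -> continuous g' q) ->
  continuous (glue f' g') q.
Proof.
  intros Cf Cg; destruct (Rlt_dec q 1) as [H | H].
  - apply (continuous_ext_loc _ f'); [| apply Cf].
    apply (filter_imp (fun y => glue f' g' y = f' y)); [now intros y -> |].
    apply locally_glue_left, H.
  - apply (continuous_ext_loc _ g'); [| apply Cg; lra].
    apply (filter_imp (fun y => 1 / 2 < y)); [| apply (open_gt (1 / 2) q); lra].
    intros y Hy; symmetry; apply glue_pos; lra.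
Qed.
End Glue.

Section RadialProfile.
Variable R1 : R.
Hypothesis HR1 : 0 < R1 < PI / 2.

(* [bend] is the identity up to [PI/2] and then flattens out below [PI - R1],
   so that [|cos (bend r)| <= cos R1] for [r >= PI/2]. *)
Definition bend_width := (PI / 2 - R1) / 2.
Definition bend r := PI / 2 + bend_width * atan_ramp ((r - PI / 2) / bend_width).
Definition bend' r := atan_ramp' ((r - PI / 2) / bend_width).

Lemma bend_width_gt0 : 0 < bend_width.
Proof. unfold bend_width; lra. Qed.

Lemma is_derive_bend r : is_derive bend r (bend' r).
Proof.
  pose proof bend_width_gt0; pose proof (is_derive_atan_ramp ((r - PI / 2) / bend_width)).
  unfold bend, bend'; auto_derive; [now exists (atan_ramp' ((r - PI / 2) / bend_width)) |].
  change (fun x : R => atan_ramp x) with atan_ramp.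
  replace ((r + - (PI / 2)) * / bend_width) with ((r - PI / 2) / bend_width) by (unfold Rdiv; ring).
  rewrite (is_derive_unique _ _ _ H0); field; lra.
Qed.

Lemma bend_continuous r : continuous bend r.
Proof. apply ex_derive_continuous_R; exists (bend' r); apply is_derive_bend. Qed.

Lemma bend'_continuous r : continuous bend' r.
Proof.
  pose proof bend_width_gt0; unfold bend'.
  apply (continuous_comp_R (fun r => (r - PI / 2) / bend_width) atan_ramp');
    [repeat continuity_step; lra | apply atan_ramp'_continuous].
Qed.

Lemma bend_id r : r <= PI / 2 -> bend r = r.
Proof.
  intro H; pose proof bend_width_gt0; unfold bend; rewrite atan_ramp_nonpos.
  - field; lra.
  - apply Rmult_le_reg_r with bend_width; [assumption | field_simplify; lra].
Qed.

Lemma bend_range r : PI / 2 <= r -> PI / 2 <= bend r < PI - R1.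
Proof.
  intro H; pose proof bend_width_gt0; unfold bend.
  assert (Hq0 : 0 <= (r - PI / 2) / bend_width)
    by (apply Rmult_le_pos; [lra | apply Rlt_le, Rinv_0_lt_compat; lra]).
  rewrite atan_ramp_nonneg by assumption.
  pose proof (atan_bound ((r - PI / 2) / bend_width)).
  assert (0 <= atan ((r - PI / 2) / bend_width)).
  { rewrite <- atan_0; destruct (Req_dec ((r - PI / 2) / bend_width) 0) as [E | E];
      [rewrite E; lra | apply Rlt_le, atan_increasing; lra]. }
  split; [nra |]; unfold bend_width in *; pose proof PI_RGT_0; pose proof PI_4; nra.
Qed.

Lemma sin_bend_sqr_le r : 0 < r -> sin (bend r) ^ 2 <= r ^ 2.
Proof.
  intro Hr; destruct (Rle_dec r (PI / 2)) as [H | H].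
  - rewrite bend_id by assumption; pose proof (sin_lt_x r Hr).
    pose proof (sin_ge_0 r ltac:(lra) ltac:(lra)); nra.
  - pose proof (SIN_bound (bend r)); pose proof PI2_1; nra.
Qed.

Definition cos_bend q := cos (bend (sqrt q)).
Definition sinc_bend q := sin (bend (sqrt q)) / sqrt q.
Definition cos_bend' q := - sin (bend (sqrt q)) * bend' (sqrt q) / (2 * sqrt q).
Definition sinc_bend' q :=
  (sqrt q * cos (bend (sqrt q)) * bend' (sqrt q) - sin (bend (sqrt q))) / (2 * q * sqrt q).

Lemma is_derive_cos_bend q : 0 < q -> is_derive cos_bend q (cos_bend' q).
Proof.
  intro Hq; pose proof (sqrt_lt_R0 q Hq); pose proof (is_derive_bend (sqrt q)) as Hb.
  unfold cos_bend, cos_bend'; auto_derive.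
  - split; [now exists (bend' (sqrt q)) | auto].
  - change (fun x : R => bend x) with bend; rewrite (is_derive_unique _ _ _ Hb); field; lra.
Qed.

Lemma is_derive_sinc_bend q : 0 < q -> is_derive sinc_bend q (sinc_bend' q).
Proof.
  intro Hq; pose proof (sqrt_lt_R0 q Hq); pose proof (is_derive_bend (sqrt q)) as Hb.
  assert (Hs : sqrt q * sqrt q = q) by (apply sqrt_sqrt; lra).
  unfold sinc_bend, sinc_bend'; auto_derive.
  - repeat split; try (now exists (bend' (sqrt q))); auto; lra.
  - change (fun x : R => bend x) with bend; rewrite (is_derive_unique _ _ _ Hb).
    replace (2 * q * sqrt q) with (2 * (sqrt q * sqrt q) * sqrt q) by (rewrite Hs; ring).
    field; lra.
Qed.

Lemma bend_sqrt_continuous q : continuous (fun y => bend (sqrt y)) q.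
Proof. apply (continuous_comp_R sqrt bend); [apply continuous_sqrt | apply bend_continuous]. Qed.

Lemma bend'_sqrt_continuous q : continuous (fun y => bend' (sqrt y)) q.
Proof. apply (continuous_comp_R sqrt bend'); [apply continuous_sqrt | apply bend'_continuous]. Qed.

Lemma cos_bend'_continuous q : 0 < q -> continuous cos_bend' q.
Proof.
  intro Hq; pose proof (sqrt_lt_R0 q Hq); unfold cos_bend'.
  repeat continuity_step; try apply bend_sqrt_continuous; try apply bend'_sqrt_continuous;
    try apply continuous_sqrt; lra.
Qed.

Lemma sinc_bend'_continuous q : 0 < q -> continuous sinc_bend' q.
Proof.
  intro Hq; pose proof (sqrt_lt_R0 q Hq); unfold sinc_bend'.
  repeat continuity_step; try apply bend_sqrt_continuous; try apply bend'_sqrt_continuous;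
    try apply continuous_sqrt.
  apply Rgt_not_eq, Rmult_lt_0_compat; lra.
Qed.

Definition radial_cos := glue cos_sqrt_series cos_bend.
Definition radial_cos' := glue cos_sqrt_series' cos_bend'.
Definition radial_sinc := glue sinc_sqrt_series sinc_bend.
Definition radial_sinc' := glue sinc_sqrt_series' sinc_bend'.

Lemma sqrt_unit_interval_bounds q : 0 < q < 1 -> 0 < sqrt q <= PI / 2.
Proof.
  intro Hq; split; [apply sqrt_lt_R0; lra |].
  assert (sqrt q < 1) by (rewrite <- sqrt_1; apply sqrt_lt_1_alt; lra).
  pose proof PI2_1; lra.
Qed.

Lemma cos_sqrt_series_eq_cos_bend q : 0 < q < 1 -> cos_sqrt_series q = cos_bend q.
Proof.
  intro Hq; destruct (sqrt_unit_interval_bounds q Hq).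
  unfold cos_bend; rewrite bend_id, <- (cos_sqrt_series_sqr (sqrt q)), pow2_sqrt by lra.
  reflexivity.
Qed.

Lemma sinc_sqrt_series_eq_sinc_bend q : 0 < q < 1 -> sinc_sqrt_series q = sinc_bend q.
Proof.
  intro Hq; destruct (sqrt_unit_interval_bounds q Hq).
  unfold sinc_bend; rewrite bend_id, <- (sinc_sqrt_series_sqr (sqrt q)), pow2_sqrt by lra.
  field; lra.
Qed.

Lemma radial_cos_pos q : 0 < q -> radial_cos q = cos_bend q /\ radial_cos' q = cos_bend' q.
Proof.
  apply glue_pos; [apply is_derive_cos_sqrt_series | apply is_derive_cos_bend |
                   apply cos_sqrt_series_eq_cos_bend].
Qed.

Lemma radial_sinc_pos q :
  0 < q -> radial_sinc q = sinc_bend q /\ radial_sinc' q = sinc_bend' q.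
Proof.
  apply glue_pos; [apply is_derive_sinc_sqrt_series | apply is_derive_sinc_bend |
                   apply sinc_sqrt_series_eq_sinc_bend].
Qed.

Lemma radial_cos_0 : radial_cos 0 = 1.
Proof. unfold radial_cos, glue; destruct (Rlt_dec 0 1); [apply cos_sqrt_series_0 | lra]. Qed.

Lemma radial_sinc_0 : radial_sinc 0 = 1.
Proof. unfold radial_sinc, glue; destruct (Rlt_dec 0 1); [apply sinc_sqrt_series_0 | lra]. Qed.

Lemma is_derive_radial_cos q : is_derive radial_cos q (radial_cos' q).
Proof.
  apply is_derive_glue; [apply is_derive_cos_sqrt_series | apply is_derive_cos_bend |
                         apply cos_sqrt_series_eq_cos_bend].
Qed.

Lemma is_derive_radial_sinc q : is_derive radial_sinc q (radial_sinc' q).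
Proof.
  apply is_derive_glue; [apply is_derive_sinc_sqrt_series | apply is_derive_sinc_bend |
                         apply sinc_sqrt_series_eq_sinc_bend].
Qed.

Lemma radial_cos'_continuous q : continuous radial_cos' q.
Proof.
  apply glue_continuous with cos_sqrt_series cos_bend;
    [apply is_derive_cos_sqrt_series | apply is_derive_cos_bend |
     apply cos_sqrt_series_eq_cos_bend | apply cos_sqrt_series'_continuous |
     apply cos_bend'_continuous].
Qed.

Lemma radial_sinc'_continuous q : continuous radial_sinc' q.
Proof.
  apply glue_continuous with sinc_sqrt_series sinc_bend;
    [apply is_derive_sinc_sqrt_series | apply is_derive_sinc_bend |
     apply sinc_sqrt_series_eq_sinc_bend | apply sinc_sqrt_series'_continuous |
     apply sinc_bend'_continuous].
Qed.

Lemma radial_cos_continuous q : continuous radial_cos q.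
Proof. apply ex_derive_continuous_R; exists (radial_cos' q); apply is_derive_radial_cos. Qed.

Lemma radial_sinc_continuous q : continuous radial_sinc q.
Proof. apply ex_derive_continuous_R; exists (radial_sinc' q); apply is_derive_radial_sinc. Qed.

Lemma radial_unit q : 0 <= q -> radial_cos q ^ 2 + q * radial_sinc q ^ 2 = 1.
Proof.
  intro Hq; destruct (Req_dec q 0) as [-> | Hq0]; [rewrite radial_cos_0; ring |].
  destruct (radial_cos_pos q ltac:(lra)) as [-> _].
  destruct (radial_sinc_pos q ltac:(lra)) as [-> _].
  unfold cos_bend, sinc_bend; pose proof (sqrt_lt_R0 q ltac:(lra)).
  pose proof (sin2_cos2 (bend (sqrt q))); unfold Rsqr in *.
  assert (Hs : sqrt q * sqrt q = q) by (apply sqrt_sqrt; lra).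
  set (r := sqrt q) in *; rewrite <- Hs; field_simplify; lra.
Qed.

Lemma radial_orth q :
  0 < q -> radial_cos q * radial_cos' q + q * radial_sinc q * radial_sinc' q
           + radial_sinc q ^ 2 / 2 = 0.
Proof.
  intro Hq; destruct (radial_cos_pos q Hq) as [-> ->]; destruct (radial_sinc_pos q Hq) as [-> ->].
  unfold cos_bend, sinc_bend, cos_bend', sinc_bend'; pose proof (sqrt_lt_R0 q Hq).
  assert (Hs : sqrt q * sqrt q = q) by (apply sqrt_sqrt; lra).
  set (r := sqrt q) in *; rewrite <- Hs; field; lra.
Qed.

(* In polar coordinates the differential of [w |-> (radial_cos |w|^2, radial_sinc |w|^2 w)]
   scales the radial component by [bend' <= 1] and the angular one by
   [sin (bend r) / r <= 1]. *)
Lemma radial_differential_le q w1 w2 v1 v2 : q = w1 ^ 2 + w2 ^ 2 -> 0 < q ->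
  let dq := 2 * (w1 * v1 + w2 * v2) in
  (radial_sinc' q * dq * w1 + radial_sinc q * v1) ^ 2
  + (radial_sinc' q * dq * w2 + radial_sinc q * v2) ^ 2 + (radial_cos' q * dq) ^ 2
  <= v1 ^ 2 + v2 ^ 2.
Proof.
  intros Hq Hq0 dq.
  assert (E1 : (radial_sinc' q * dq * w1 + radial_sinc q * v1) ^ 2
               + (radial_sinc' q * dq * w2 + radial_sinc q * v2) ^ 2 + (radial_cos' q * dq) ^ 2
               = radial_sinc q ^ 2 * (v1 ^ 2 + v2 ^ 2)
                 + dq ^ 2 * (radial_cos' q ^ 2 + radial_sinc q * radial_sinc' q
                             + q * radial_sinc' q ^ 2))
    by (unfold dq; rewrite Hq; ring).
  rewrite E1; clear E1.
  assert (CS : dq ^ 2 <= 4 * q * (v1 ^ 2 + v2 ^ 2))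
    by (unfold dq; rewrite Hq; pose proof (pow2_ge_0 (w1 * v2 - w2 * v1)); nra).
  destruct (radial_cos_pos q Hq0) as [_ ->]; destruct (radial_sinc_pos q Hq0) as [-> ->].
  unfold cos_bend', sinc_bend, sinc_bend'.
  pose proof (sqrt_lt_R0 q Hq0) as Hr.
  assert (Hs : sqrt q * sqrt q = q) by (apply sqrt_sqrt; lra).
  pose proof (sin2_cos2 (bend (sqrt q))) as Hsc; unfold Rsqr in Hsc.
  pose proof (atan_ramp'_bounds ((sqrt q - PI / 2) / bend_width)) as Hb.
  pose proof (sin_bend_sqr_le (sqrt q) Hr) as Hsq.
  fold (bend' (sqrt q)) in Hb.
  set (s := sin (bend (sqrt q))) in *; set (c := cos (bend (sqrt q))) in *.
  set (b := bend' (sqrt q)) in *; set (r := sqrt q) in *.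
  clearbody s c b r; rewrite <- Hs in CS |- *.
  set (X := v1 ^ 2 + v2 ^ 2) in *; set (Y := dq ^ 2) in *.
  assert (HY : 0 <= Y) by apply pow2_ge_0.
  clearbody X Y.
  assert (Hr2 : 0 < r * r) by nra.
  assert (E : (- s * b / (2 * r)) ^ 2 + s / r * ((r * c * b - s) / (2 * (r * r) * r))
              + r * r * ((r * c * b - s) / (2 * (r * r) * r)) ^ 2
              = ((r * r) * b ^ 2 - s ^ 2) / (4 * (r * r) ^ 2)).
  { field_simplify; try lra; replace (c ^ 2) with (1 - s ^ 2) by lra; field; lra. }
  rewrite E.
  assert (Hden : 0 < / (4 * (r * r) ^ 2)) by (apply Rinv_0_lt_compat; nra).
  assert (B1 : Y * ((r * r * b ^ 2 - s ^ 2) / (4 * (r * r) ^ 2))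
               <= Y * ((r * r - s ^ 2) / (4 * (r * r) ^ 2))).
  { apply Rmult_le_compat_l; [lra |].
    assert (b ^ 2 <= 1) by nra.
    unfold Rdiv; apply Rmult_le_compat_r; [lra | nra]. }
  assert (B2 : Y * ((r * r - s ^ 2) / (4 * (r * r) ^ 2))
               <= 4 * (r * r) * X * ((r * r - s ^ 2) / (4 * (r * r) ^ 2))).
  { apply Rmult_le_compat_r; [| lra].
    unfold Rdiv; apply Rmult_le_pos; nra. }
  assert (E4 : (s / r) ^ 2 * X + 4 * (r * r) * X * ((r * r - s ^ 2) / (4 * (r * r) ^ 2)) = X)
    by (field; lra).
  lra.
Qed.

Lemma radial_cos_sqr_le_cos_sqr q d :
  0 <= q -> 0 <= d -> d <= sqrt q -> d <= R1 -> radial_cos q ^ 2 <= cos d ^ 2.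
Proof.
  intros Hq Hd H1 H2; pose proof PI_RGT_0.
  destruct (Req_dec q 0) as [-> | Hq0].
  { rewrite sqrt_0 in H1; replace d with 0 by lra; rewrite radial_cos_0, cos_0; lra. }
  destruct (radial_cos_pos q ltac:(lra)) as [-> _]; unfold cos_bend.
  pose proof (sqrt_lt_R0 q ltac:(lra)) as Hr.
  assert (Hcd : cos R1 <= cos d).
  { destruct (Req_dec d R1) as [-> | Hne]; [lra | apply Rlt_le, cos_decreasing_1; lra]. }
  destruct (Rle_dec (sqrt q) (PI / 2)) as [Hs | Hs].
  - rewrite bend_id by assumption.
    assert (cos (sqrt q) <= cos d).
    { destruct (Req_dec d (sqrt q)) as [-> | Hne]; [lra | apply Rlt_le, cos_decreasing_1; lra]. }
    pose proof (cos_ge_0 (sqrt q) ltac:(lra) ltac:(lra)); nra.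
  - destruct (bend_range (sqrt q) ltac:(lra)) as [P1 P2].
    assert (cos (bend (sqrt q)) <= 0).
    { rewrite <- cos_PI2; destruct (Req_dec (bend (sqrt q)) (PI / 2)) as [-> | Hne];
        [lra | apply Rlt_le, cos_decreasing_1; lra]. }
    assert (C2 : cos (PI - R1) < cos (bend (sqrt q))) by (apply cos_decreasing_1; lra).
    rewrite Rtrigo_facts.cos_pi_minus in C2.
    pose proof (cos_ge_0 R1 ltac:(lra) ltac:(lra)); nra.
Qed.
End RadialProfile.

Lemma Cauchy_Schwarz_4 a1 a2 a3 a4 b1 b2 b3 b4 :
  (a1 * b1 + a2 * b2 + a3 * b3 + a4 * b4) ^ 2
  <= (a1 ^ 2 + a2 ^ 2 + a3 ^ 2 + a4 ^ 2) * (b1 ^ 2 + b2 ^ 2 + b3 ^ 2 + b4 ^ 2).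
Proof.
  assert (E : (a1^2 + a2^2 + a3^2 + a4^2) * (b1^2 + b2^2 + b3^2 + b4^2)
              - (a1*b1 + a2*b2 + a3*b3 + a4*b4) ^ 2
              = (a1*b2 - a2*b1)^2 + (a1*b3 - a3*b1)^2 + (a1*b4 - a4*b1)^2
                + (a2*b3 - a3*b2)^2 + (a2*b4 - a4*b2)^2 + (a3*b4 - a4*b3)^2) by ring.
  pose proof (pow2_ge_0 (a1*b2 - a2*b1)); pose proof (pow2_ge_0 (a1*b3 - a3*b1)).
  pose proof (pow2_ge_0 (a1*b4 - a4*b1)); pose proof (pow2_ge_0 (a2*b3 - a3*b2)).
  pose proof (pow2_ge_0 (a2*b4 - a4*b2)); pose proof (pow2_ge_0 (a3*b4 - a4*b3)); lra.
Qed.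

(* Cauchy-Schwarz applied to [D] and the component [A - h P] of [A] orthogonal
   to [P]: the rate of change of the height [A.P] along a tangent vector [D] at
   [P] on the unit sphere. *)
Lemma sphere_height_rate_le A1 A2 A3 A4 P1 P2 P3 P4 D1 D2 D3 D4 :
  A1 ^ 2 + A2 ^ 2 + A3 ^ 2 + A4 ^ 2 = 1 -> P1 ^ 2 + P2 ^ 2 + P3 ^ 2 + P4 ^ 2 = 1 ->
  P1 * D1 + P2 * D2 + P3 * D3 + P4 * D4 = 0 ->
  (A1 * D1 + A2 * D2 + A3 * D3 + A4 * D4) ^ 2
  <= (D1 ^ 2 + D2 ^ 2 + D3 ^ 2 + D4 ^ 2) * (1 - (A1 * P1 + A2 * P2 + A3 * P3 + A4 * P4) ^ 2).
Proof.
  intros HA HP HPD; set (h := A1 * P1 + A2 * P2 + A3 * P3 + A4 * P4).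
  pose proof (Cauchy_Schwarz_4 D1 D2 D3 D4
                (A1 - h * P1) (A2 - h * P2) (A3 - h * P3) (A4 - h * P4)) as C.
  replace (D1 * (A1 - h * P1) + D2 * (A2 - h * P2) + D3 * (A3 - h * P3) + D4 * (A4 - h * P4))
    with (A1 * D1 + A2 * D2 + A3 * D3 + A4 * D4 - h * (P1 * D1 + P2 * D2 + P3 * D3 + P4 * D4))
    in C by ring.
  replace ((A1 - h * P1) ^ 2 + (A2 - h * P2) ^ 2 + (A3 - h * P3) ^ 2 + (A4 - h * P4) ^ 2)
    with ((A1 ^ 2 + A2 ^ 2 + A3 ^ 2 + A4 ^ 2) - 2 * h * h
          + h ^ 2 * (P1 ^ 2 + P2 ^ 2 + P3 ^ 2 + P4 ^ 2)) in C by (unfold h; ring).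
  rewrite HPD, HA, HP in C.
  replace (1 - 2 * h * h + h ^ 2 * 1) with (1 - h ^ 2) in C by ring.
  replace (A1 * D1 + A2 * D2 + A3 * D3 + A4 * D4 - h * 0)
    with (A1 * D1 + A2 * D2 + A3 * D3 + A4 * D4) in C by ring.
  exact C.
Qed.

Lemma is_derive_acos x : -1 < x < 1 -> is_derive acos x (- / sqrt (1 - x ^ 2)).
Proof.
  intro Hx; apply is_derive_Reals, (derive_pt_eq_1 _ _ _ (derivable_pt_acos x Hx)).
  rewrite derive_pt_acos; unfold Rsqr; replace (x * x) with (x ^ 2) by ring.
  field; apply Rgt_not_eq, sqrt_lt_R0; nra.
Qed.

Lemma cos_sin_period_Z x k :
  cos (x + 2 * PI * IZR k) = cos x /\ sin (x + 2 * PI * IZR k) = sin x.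
Proof.
  destruct (Z_le_gt_dec 0 k) as [Hk | Hk].
  - replace k with (Z.of_nat (Z.to_nat k)) by lia; rewrite <- INR_IZR_INZ.
    replace (x + 2 * PI * INR (Z.to_nat k)) with (x + 2 * INR (Z.to_nat k) * PI) by ring.
    split; [apply cos_period | apply sin_period].
  - replace k with (- Z.of_nat (Z.to_nat (- k)))%Z by lia; rewrite opp_IZR, <- INR_IZR_INZ.
    set (n := Z.to_nat (- k)).
    pose proof (cos_period (x + 2 * PI * - INR n) n) as H1.
    pose proof (sin_period (x + 2 * PI * - INR n) n) as H2.
    replace (x + 2 * PI * - INR n + 2 * INR n * PI) with x in H1, H2 by ring.
    split; auto.
Qed.

(* [acos (e h)] with [e < 1] is a smooth stand-in for the spherical distance
   [acos h], and it moves no faster. *)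
Lemma damped_acos_rate_le e h dh N :
  0 < e < 1 -> h ^ 2 <= 1 -> 0 <= N -> dh ^ 2 <= N * (1 - h ^ 2) ->
  (e * dh / sqrt (1 - (e * h) ^ 2)) ^ 2 <= N.
Proof.
  intros He Hh HN Hdh.
  assert (HQ : 0 < 1 - (e * h) ^ 2) by nra.
  assert (HD : sqrt (1 - (e * h) ^ 2) ^ 2 = 1 - (e * h) ^ 2)
    by (rewrite <- Rsqr_pow2; apply Rsqr_sqrt; lra).
  assert (sqrt (1 - (e * h) ^ 2) <> 0) by (apply Rgt_not_eq, sqrt_lt_R0; lra).
  replace ((e * dh / sqrt (1 - (e * h) ^ 2)) ^ 2)
    with (e ^ 2 * dh ^ 2 / sqrt (1 - (e * h) ^ 2) ^ 2) by (field; auto).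
  rewrite HD.
  apply (Rmult_le_reg_r (1 - (e * h) ^ 2)); [assumption |].
  unfold Rdiv; rewrite Rmult_assoc, Rinv_l, Rmult_1_r by lra.
  assert (e ^ 2 * (1 - h ^ 2) <= 1 - (e * h) ^ 2) by nra.
  assert (e ^ 2 * dh ^ 2 <= e ^ 2 * (N * (1 - h ^ 2))) by (apply Rmult_le_compat_l; nra).
  nra.
Qed.

Lemma sqr_eq_0_plane x y : x ^ 2 + y ^ 2 = 0 -> x = 0 /\ y = 0.
Proof. intro H; pose proof (pow2_ge_0 x); pose proof (pow2_ge_0 y); split; nra. Qed.

(* [S3_1, ..., S3_4] are the components of the map [F] of the header, written
   through [q = |(x, y) - d|^2] as [radial_cos q = cos rho] and
   [radial_sinc q = sin rho / sqrt q], so that they are C^1 through [d]. *)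
Section S3Map.
Variable R1 : R.
Hypothesis HR1 : 0 < R1 < PI / 2.
Variables d1 d2 : R.

Definition sqdist_d x y := (x - d1) ^ 2 + (y - d2) ^ 2.
Definition S3_1 x y z := radial_cos R1 (sqdist_d x y) * cos z.
Definition S3_2 x y z := radial_cos R1 (sqdist_d x y) * sin z.
Definition S3_3 x y := radial_sinc R1 (sqdist_d x y) * (x - d1).
Definition S3_4 x y := radial_sinc R1 (sqdist_d x y) * (y - d2).

Lemma sqdist_d_ge0 x y : 0 <= sqdist_d x y.
Proof. unfold sqdist_d; pose proof (pow2_ge_0 (x - d1)); pose proof (pow2_ge_0 (y - d2)); lra. Qed.

Lemma S3_unit x y z : S3_1 x y z ^ 2 + S3_2 x y z ^ 2 + S3_3 x y ^ 2 + S3_4 x y ^ 2 = 1.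
Proof.
  rewrite <- (radial_unit R1 HR1 (sqdist_d x y) (sqdist_d_ge0 x y)).
  pose proof (sin2_cos2 z) as H; unfold Rsqr in H; unfold S3_1, S3_2, S3_3, S3_4.
  transitivity (radial_cos R1 (sqdist_d x y) ^ 2 * (sin z * sin z + cos z * cos z)
                + radial_sinc R1 (sqdist_d x y) ^ 2 * ((x - d1) ^ 2 + (y - d2) ^ 2)); [ring |].
  rewrite H; unfold sqdist_d; ring.
Qed.

Lemma S3_antipodal x y z k :
  S3_1 (2 * d1 - x) (2 * d2 - y) (z + PI + 2 * PI * IZR k) = - S3_1 x y z /\
  S3_2 (2 * d1 - x) (2 * d2 - y) (z + PI + 2 * PI * IZR k) = - S3_2 x y z /\
  S3_3 (2 * d1 - x) (2 * d2 - y) = - S3_3 x y /\ S3_4 (2 * d1 - x) (2 * d2 - y) = - S3_4 x y.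
Proof.
  assert (Hq : sqdist_d (2 * d1 - x) (2 * d2 - y) = sqdist_d x y) by (unfold sqdist_d; ring).
  unfold S3_1, S3_2, S3_3, S3_4; rewrite Hq.
  destruct (cos_sin_period_Z (z + PI) k) as [-> ->]; rewrite neg_cos, neg_sin.
  repeat split; ring.
Qed.

Variables A1 A2 A3 A4 e : R.
Hypothesis HA : A1 ^ 2 + A2 ^ 2 + A3 ^ 2 + A4 ^ 2 = 1.
Hypothesis He : 0 < e < 1.

Definition S3_height x y z :=
  A1 * S3_1 x y z + A2 * S3_2 x y z + A3 * S3_3 x y + A4 * S3_4 x y.

Lemma S3_height_sqr_le_1 x y z : S3_height x y z ^ 2 <= 1.
Proof.
  pose proof (Cauchy_Schwarz_4 A1 A2 A3 A4 (S3_1 x y z) (S3_2 x y z) (S3_3 x y) (S3_4 x y)) as C.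
  rewrite HA, S3_unit in C; unfold S3_height; lra.
Qed.

Lemma e_S3_height_bounds x y z : -1 < e * S3_height x y z < 1.
Proof.
  pose proof (S3_height_sqr_le_1 x y z).
  assert ((e * S3_height x y z) ^ 2 < 1) by nra; split; nra.
Qed.

Variable a : R.
Hypothesis Hd : in_Delta a (d1, d2).
Hypothesis Hcov : forall x y, dist_Delta a x y <= R1.

Section Curve.
Variables fx fy fz : R -> R.
Hypotheses (Cx : Defs.C1 fx) (Cy : Defs.C1 fy) (Cz : Defs.C1 fz).

Definition sqd t := sqdist_d (fx t) (fy t).
Definition sqd' t := 2 * ((fx t - d1) * Derive fx t + (fy t - d2) * Derive fy t).
Definition dS3_1 t :=
  radial_cos' R1 (sqd t) * sqd' t * cos (fz t) - radial_cos R1 (sqd t) * sin (fz t) * Derive fz t.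
Definition dS3_2 t :=
  radial_cos' R1 (sqd t) * sqd' t * sin (fz t) + radial_cos R1 (sqd t) * cos (fz t) * Derive fz t.
Definition dS3_3 t := radial_sinc' R1 (sqd t) * sqd' t * (fx t - d1) + radial_sinc R1 (sqd t) * Derive fx t.
Definition dS3_4 t := radial_sinc' R1 (sqd t) * sqd' t * (fy t - d2) + radial_sinc R1 (sqd t) * Derive fy t.
Definition height t := S3_height (fx t) (fy t) (fz t).
Definition height' t := A1 * dS3_1 t + A2 * dS3_2 t + A3 * dS3_3 t + A4 * dS3_4 t.

Lemma is_derive_height t : is_derive height t (height' t).
Proof.
  destruct Cx as [Dx _], Cy as [Dy _], Cz as [Dz _].
  unfold height, height', S3_height, S3_1, S3_2, S3_3, S3_4,
    dS3_1, dS3_2, dS3_3, dS3_4, sqd', sqd, sqdist_d.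
  auto_derive.
  - repeat split; match goal with
     | |- ex_derive (fun x => radial_cos _ x) ?q =>
         exists (radial_cos' R1 q); apply is_derive_radial_cos, HR1
     | |- ex_derive (fun x => radial_sinc _ x) ?q =>
         exists (radial_sinc' R1 q); apply is_derive_radial_sinc, HR1
     | |- ex_derive (fun x => fx x) _ => exact (Dx t)
     | |- ex_derive (fun x => fy x) _ => exact (Dy t)
     | |- ex_derive (fun x => fz x) _ => exact (Dz t)
     end.
  - rewrite !(is_derive_unique _ _ _ (is_derive_radial_cos R1 HR1 _)),
      !(is_derive_unique _ _ _ (is_derive_radial_sinc R1 HR1 _)).
    change (fun x : R => fx x) with fx; change (fun x : R => fy x) with fy;
      change (fun x : R => fz x) with fz.
    replace ((fx t + - d1) * ((fx t + - d1) * 1) + (fy t + - d2) * ((fy t + - d2) * 1))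
      with ((fx t - d1) ^ 2 + (fy t - d2) ^ 2) by ring.
    ring.
Qed.

Lemma height'_continuous t : continuous height' t.
Proof.
  assert (Fx : forall t, continuous fx t) by (intro; apply ex_derive_continuous_R, Cx).
  assert (Fy : forall t, continuous fy t) by (intro; apply ex_derive_continuous_R, Cy).
  assert (Fz : forall t, continuous fz t) by (intro; apply ex_derive_continuous_R, Cz).
  destruct Cx as [_ Gx], Cy as [_ Gy], Cz as [_ Gz].
  unfold height', dS3_1, dS3_2, dS3_3, dS3_4, sqd', sqd, sqdist_d.
  repeat first [ continuity_step
    | match goal with
      | |- continuous (fun y => radial_cos R1 (@?f y)) _ =>
          apply (continuous_comp_R f (radial_cos R1)); [| apply radial_cos_continuous, HR1]
      | |- continuous (fun y => radial_sinc R1 (@?f y)) _ =>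
          apply (continuous_comp_R f (radial_sinc R1)); [| apply radial_sinc_continuous, HR1]
      | |- continuous (fun y => radial_cos' R1 (@?f y)) _ =>
          apply (continuous_comp_R f (radial_cos' R1)); [| apply radial_cos'_continuous, HR1]
      | |- continuous (fun y => radial_sinc' R1 (@?f y)) _ =>
          apply (continuous_comp_R f (radial_sinc' R1)); [| apply radial_sinc'_continuous, HR1]
      | |- continuous (fun y => Derive fx y) _ => exact (Gx _)
      | |- continuous (fun y => Derive fy y) _ => exact (Gy _)
      | |- continuous (fun y => Derive fz y) _ => exact (Gz _)
      | |- continuous (fun y => fx y) _ => exact (Fx _)
      | |- continuous (fun y => fy y) _ => exact (Fy _)
      | |- continuous (fun y => fz y) _ => exact (Fz _)
      end ].
Qed.

Lemma height_continuous t : continuous height t.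
Proof. apply ex_derive_continuous_R; exists (height' t); apply is_derive_height. Qed.

Lemma S3_curve_velocity_orth t :
  S3_1 (fx t) (fy t) (fz t) * dS3_1 t + S3_2 (fx t) (fy t) (fz t) * dS3_2 t
  + S3_3 (fx t) (fy t) * dS3_3 t + S3_4 (fx t) (fy t) * dS3_4 t = 0.
Proof.
  unfold S3_1, S3_2, S3_3, S3_4, dS3_1, dS3_2, dS3_3, dS3_4.
  pose proof (sin2_cos2 (fz t)) as H; unfold Rsqr in H; fold (sqd t).
  transitivity (sqd' t * (radial_cos R1 (sqd t) * radial_cos' R1 (sqd t)
                            * (sin (fz t) * sin (fz t) + cos (fz t) * cos (fz t))
                          + sqd t * radial_sinc R1 (sqd t) * radial_sinc' R1 (sqd t)
                          + radial_sinc R1 (sqd t) ^ 2 / 2)).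
  { unfold sqd', sqd, sqdist_d; field. }
  rewrite H, Rmult_1_r; destruct (Req_dec (sqd t) 0) as [E | E].
  - unfold sqd, sqdist_d in E; apply sqr_eq_0_plane in E.
    unfold sqd'; destruct E as [-> ->]; ring.
  - rewrite (radial_orth R1 HR1); [ring |].
    pose proof (sqdist_d_ge0 (fx t) (fy t)); unfold sqd in *; lra.
Qed.

Lemma S3_curve_speed_le t :
  dS3_1 t ^ 2 + dS3_2 t ^ 2 + dS3_3 t ^ 2 + dS3_4 t ^ 2
  <= Derive fx t ^ 2 + Derive fy t ^ 2 + cos (dist_Delta a (fx t) (fy t)) ^ 2 * Derive fz t ^ 2.
Proof.
  pose proof (sin2_cos2 (fz t)) as H; unfold Rsqr in H.
  assert (E : dS3_1 t ^ 2 + dS3_2 t ^ 2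
              = (radial_cos' R1 (sqd t) * sqd' t) ^ 2 + radial_cos R1 (sqd t) ^ 2 * Derive fz t ^ 2).
  { unfold dS3_1, dS3_2.
    transitivity (((radial_cos' R1 (sqd t) * sqd' t) ^ 2
                   + radial_cos R1 (sqd t) ^ 2 * Derive fz t ^ 2)
                  * (sin (fz t) * sin (fz t) + cos (fz t) * cos (fz t))); [ring |].
    rewrite H; ring. }
  assert (Hc : radial_cos R1 (sqd t) ^ 2 * Derive fz t ^ 2
               <= cos (dist_Delta a (fx t) (fy t)) ^ 2 * Derive fz t ^ 2).
  { apply Rmult_le_compat_r; [apply pow2_ge_0 |].
    apply (radial_cos_sqr_le_cos_sqr R1 HR1);
      [apply sqdist_d_ge0 | apply dist_Delta_ge0 | | apply Hcov].
    eapply Rle_trans; [apply (dist_Delta_le a _ _ (d1, d2) Hd) |].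
    unfold dist2, sqd, sqdist_d; cbn [fst snd]; lra. }
  destruct (Req_dec (sqd t) 0) as [Eq | Eq].
  - assert (W := Eq); unfold sqd, sqdist_d in W; apply sqr_eq_0_plane in W.
    assert (Q0 : sqd' t = 0) by (unfold sqd'; destruct W as [-> ->]; ring).
    unfold dS3_3, dS3_4; rewrite Q0, Eq, (radial_sinc_0 R1).
    rewrite Q0 in E; destruct W as [-> ->]; nra.
  - pose proof (radial_differential_le R1 HR1 (sqd t) (fx t - d1) (fy t - d2)
                  (Derive fx t) (Derive fy t) eq_refl
                  ltac:(pose proof (sqdist_d_ge0 (fx t) (fy t)); unfold sqd in *; lra)) as N.
    cbv zeta in N; fold (sqd' t) in N; unfold dS3_3, dS3_4; lra.
Qed.

Definition damped_dist t := acos (e * height t).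
Definition damped_dist' t := e * height' t * (- / sqrt (1 - (e * height t) ^ 2)).

Lemma is_derive_damped_dist t : is_derive damped_dist t (damped_dist' t).
Proof.
  assert (H : is_derive (fun t => e * height t) t (e * height' t)).
  { pose proof (is_derive_height t) as H; auto_derive; [now exists (height' t) |].
    change (fun x : R => height x) with height; rewrite (is_derive_unique _ _ _ H); ring. }
  exact (is_derive_comp acos _ t _ _ (is_derive_acos _ (e_S3_height_bounds _ _ _)) H).
Qed.

Lemma damped_dist'_continuous t : continuous damped_dist' t.
Proof.
  pose proof (e_S3_height_bounds (fx t) (fy t) (fz t)); unfold damped_dist'.
  repeat continuity_step; try apply height'_continuous; try apply height_continuous.
  apply Rgt_not_eq, sqrt_lt_R0; fold (height t) in *; nra.
Qed.

Lemma damped_dist'_le_h_speed t :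
  damped_dist' t <= h_speed a (fx t, fy t, fz t) (Derive fx t, Derive fy t, Derive fz t).
Proof.
  unfold h_speed, px, py, pz; cbn [fst snd].
  pose proof (S3_curve_speed_le t) as HN.
  pose proof (sphere_height_rate_le A1 A2 A3 A4 _ _ _ _ (dS3_1 t) (dS3_2 t) (dS3_3 t) (dS3_4 t)
                HA (S3_unit (fx t) (fy t) (fz t)) (S3_curve_velocity_orth t)) as Hrate.
  fold (S3_height (fx t) (fy t) (fz t)) (height t) (height' t) in Hrate.
  set (N := dS3_1 t ^ 2 + dS3_2 t ^ 2 + dS3_3 t ^ 2 + dS3_4 t ^ 2) in *.
  assert (HN0 : 0 <= N) by (unfold N; pose proof (pow2_ge_0 (dS3_1 t));
    pose proof (pow2_ge_0 (dS3_2 t)); pose proof (pow2_ge_0 (dS3_3 t));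
    pose proof (pow2_ge_0 (dS3_4 t)); lra).
  pose proof (damped_acos_rate_le e _ _ N He (S3_height_sqr_le_1 (fx t) (fy t) (fz t)) HN0 Hrate).
  unfold damped_dist'; destruct (Rle_dec (damped_dist' t) 0) as [Hn | Hp].
  - unfold damped_dist' in Hn; pose proof (sqrt_pos
      (Derive fx t ^ 2 + Derive fy t ^ 2 + cos (dist_Delta a (fx t) (fy t)) ^ 2 * Derive fz t ^ 2)).
    lra.
  - unfold damped_dist' in Hp; rewrite <- (sqrt_pow2 (e * height' t * _)) by lra.
    apply sqrt_le_1_alt; eapply Rle_trans; [| exact HN].
    replace ((e * height' t * - / sqrt (1 - (e * height t) ^ 2)) ^ 2)
      with ((e * height' t / sqrt (1 - (e * height t) ^ 2)) ^ 2) by (unfold Rdiv; ring).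
    assumption.
Qed.

Lemma damped_dist_increment_le ta tb l : ta <= tb ->
  is_RInt (fun t => h_speed a (fx t, fy t, fz t) (Derive fx t, Derive fy t, Derive fz t)) ta tb l ->
  damped_dist tb - damped_dist ta <= l.
Proof.
  intros Hab HI.
  assert (HD : is_RInt damped_dist' ta tb (minus (damped_dist tb) (damped_dist ta))).
  { apply (@is_RInt_derive R_CompleteNormedModule); intros;
      [apply is_derive_damped_dist | apply damped_dist'_continuous]. }
  apply (is_RInt_le damped_dist' _ ta tb _ _ Hab HD HI).
  intros t _; apply damped_dist'_le_h_speed.
Qed.
End Curve.
End S3Map.

(** * The distance from [m] to [sigma m] *)

Lemma ps_curve_length_ge_increment a (W : R3 -> R) (g : R -> R3) L :
  ps_curve_length a g L ->
  (forall fx fy fz ta tb l, Defs.C1 fx -> Defs.C1 fy -> Defs.C1 fz -> ta <= tb ->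
     is_RInt (fun t => h_speed a (fx t, fy t, fz t) (Derive fx t, Derive fy t, Derive fz t))
       ta tb l ->
     W (fx tb, fy tb, fz tb) - W (fx ta, fy ta, fz ta) <= l) ->
  W (g 1) - W (g 0) <= L.
Proof.
  intros [n [tt [l [H0 [H1 [Hinc [Hpieces ->]]]]]]] Hpiece.
  rewrite <- H0, <- H1.
  enough (IH : forall k, (k <= n)%nat -> W (g (tt k)) - W (g (tt O)) <= sumR l k)
    by exact (IH n (le_n n)).
  induction k as [| k IHk]; intros Hk; [simpl; lra |].
  destruct (Hpieces k ltac:(lia)) as [fx [fy [fz [Cx [Cy [Cz [Heq HI]]]]]]].
  pose proof (Hinc k ltac:(lia)).
  pose proof (Hpiece fx fy fz (tt k) (tt (S k)) (l k) Cx Cy Cz ltac:(lra) HI) as P.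
  rewrite <- (Heq (tt k)), <- (Heq (tt (S k))) in P by lra.
  specialize (IHk ltac:(lia)); simpl; lra.
Qed.

Lemma curve_T_sigma_length_ge a (ha : 0 < a) (hsmall : 2 * a / sqrt 3 < PI / 2)
    (m : R3) (L : R) (eta : R) :
  (exists g, curve_T a g m (sigma_hex m) L) -> 0 < eta <= 1 -> PI - 2 * eta <= L.
Proof.
  intros [g [v [[i [j [k ->]]] [Hg0 [Hg1 Hlen]]]]] Heta.
  destruct m as [[x y] z].
  set (R1 := 2 * a / sqrt 3).
  assert (HR1 : 0 < R1 < PI / 2).
  { split; [| exact hsmall].
    unfold R1; pose proof sqrt3_gt0; apply Rdiv_lt_0_compat; lra. }
  set (d1 := fst (Delta_pt a i j)); set (d2 := snd (Delta_pt a i j)).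
  assert (Hd : in_Delta a (d1, d2)) by (exists i, j; reflexivity).
  set (A1 := S3_1 R1 d1 d2 x y z); set (A2 := S3_2 R1 d1 d2 x y z).
  set (A3 := S3_3 R1 d1 d2 x y); set (A4 := S3_4 R1 d1 d2 x y).
  pose proof (S3_unit R1 HR1 d1 d2 x y z) as HA; fold A1 A2 A3 A4 in HA.
  set (e := cos eta).
  assert (He : 0 < e < 1).
  { pose proof PI2_1; unfold e; split; [apply cos_gt_0; lra |].
    rewrite <- cos_0; apply cos_decreasing_1; lra. }
  assert (Hacos : acos e = eta) by (apply acos_cos; pose proof PI2_1; lra).
  assert (Hcov : forall x y, dist_Delta a x y <= R1)
    by (intros; apply dist_Delta_le_covering_radius, ha).
  assert (T : acos (e * S3_height R1 d1 d2 A1 A2 A3 A4 (px (g 1)) (py (g 1)) (pz (g 1)))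
              - acos (e * S3_height R1 d1 d2 A1 A2 A3 A4 (px (g 0)) (py (g 0)) (pz (g 0))) <= L).
  { apply (ps_curve_length_ge_increment a
             (fun p => acos (e * S3_height R1 d1 d2 A1 A2 A3 A4 (px p) (py p) (pz p))) g L Hlen).
    intros fx fy fz ta tb l Cx Cy Cz Hab HI.
    exact (damped_dist_increment_le R1 HR1 d1 d2 A1 A2 A3 A4 e HA He a Hd Hcov
             fx fy fz Cx Cy Cz ta tb l Hab HI). }
  rewrite Hg0, Hg1 in T; unfold sigma_hex, add3, px, py, pz in T; cbn [fst snd] in T.
  replace (- x + (4 * a * IZR i + 2 * a * IZR j)) with (2 * d1 - x) in T
    by (unfold d1, Delta_pt; simpl; ring).
  replace (- y + 2 * a * sqrt 3 * IZR j) with (2 * d2 - y) in T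
    by (unfold d2, Delta_pt; simpl; ring).
  destruct (S3_antipodal R1 d1 d2 x y z k) as [E1 [E2 [E3 E4]]].
  unfold S3_height in T; rewrite E1, E2, E3, E4 in T.
  fold A1 A2 A3 A4 in T.
  replace (A1 * - A1 + A2 * - A2 + A3 * - A3 + A4 * - A4) with (-1) in T by nra.
  replace (A1 * A1 + A2 * A2 + A3 * A3 + A4 * A4) with 1 in T by nra.
  replace (e * -1) with (- e) in T by ring; rewrite Rmult_1_r, acos_opp, Hacos in T.
  lra.
Qed.

Lemma curve_T_sigma_length_ge_PI a (ha : 0 < a) (hsmall : 2 * a / sqrt 3 < PI / 2)
    (m : R3) (L : R) :
  (exists g, curve_T a g m (sigma_hex m) L) -> PI <= L.
Proof.
  intro Hg; destruct (Rle_dec PI L) as [| HL]; [assumption | exfalso].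
  assert (Heta : 0 < Rmin ((PI - L) / 4) 1 <= 1)
    by (split; [apply Rmin_glb_lt; lra | apply Rmin_r]).
  pose proof (curve_T_sigma_length_ge a ha hsmall m L _ Hg Heta).
  pose proof (Rmin_l ((PI - L) / 4) 1); lra.
Qed.

Theorem mainTheorem5 (a : R) (ha : 0 < a) (hsmall : 2 * a / sqrt 3 < PI / 2) :
  forall m : R3,
    dist_T a m (sigma_hex m) >= PI /\
    dist_T a m (sigma_hex m) = PI /\
    (forall c : R * R, in_Voronoi a c (px m, py m) ->
       exists u : R * R,
         fst u ^ 2 + snd u ^ 2 = 1 /\
         (px m, py m) = (fst c + dist2 (px m, py m) c * fst u,
                         snd c + dist2 (px m, py m) c * snd u) /\
         exists g : R -> R3,
           curve_T a g m (sigma_hex m) PI /\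
           forall t, 0 <= t <= 1 ->
             in_Voronoi a c (px (g t), py (g t)) /\
             exists s : R, (px (g t), py (g t)) = (fst c + s * fst u, snd c + s * snd u)).
Proof.
  intros [[x y] z]; unfold px, py; cbn [fst snd].
  assert (Hd : dist_T a (x, y, z) (sigma_hex (x, y, z)) = PI).
  { apply real_Glb_Rbar_min.
    - destruct (Voronoi_exists a x y ha) as [c Hc].
      destruct (Voronoi_half_plane_geodesic a ha hsmall x y z c Hc) as [_ [_ [_ [g [Hg _]]]]].
      now exists g.
    - intros L HL; exact (curve_T_sigma_length_ge_PI a ha hsmall _ L HL). }
  split; [lra | split; [exact Hd |]].
  intros c Hc; exact (Voronoi_half_plane_geodesic a ha hsmall x y z c Hc).
Qed.
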